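(* Let $(q_n)_{n\in\mathbb Z},(r_n)_{n\in\mathbb Z}$ be complex sequences vanishing faster than any negative power of $|n|$ as $n\to\pm\infty$ with $1-q_nr_n\neq0$ and $1+q_nr_{n+1}\neq0$ for all $n\in\mathbb Z$, and consider the system $$\begin{bmatrix}\alpha_n\\ \beta_n\end{bmatrix}=\begin{bmatrix} z & (z-z^{-1})q_n\\ z\,r_n & z^{-1}+(z-z^{-1})q_nr_n\end{bmatrix}\begin{bmatrix}\alpha_{n+1}\\ \beta_{n+1}\end{bmatrix},\qquad n\in\mathbb Z.$$ Then: (a) its left and right transmission coefficients coincide, $T_{\rm l}=T_{\rm r}$ and $\bar T_{\rm l}=\bar T_{\rm r}$; writing $T$ for the common value of $T_{\rm l},T_{\rm r}$ and $\bar T$ for that of $\bar T_{\rm l},\bar T_{\rm r}$, $T$ has a meromorphic extension from $\mathbb T$ to $|z|<1$ and $\bar T$ has a meromorphic extension from $\mathbb T$ to $|z|>1$. (b) For $z\in\mathbb T$, $$\frac{L}{T}=-\frac{\bar R}{\bar T},\qquad \frac{\bar L}{\bar T}=-\frac{R}{T},\qquad T\bar T=1-L\bar L=1-R\bar R.$$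
   Context: $\mathbb T$ is the unit circle. For $z\in\mathbb T$ the Jost solutions $\psi_n,\phi_n,\bar\psi_n,\bar\phi_n$ (overbars are not complex conjugation) are the unique solutions with $\psi_n=\begin{bmatrix}o(1)\\ z^n[1+o(1)]\end{bmatrix}$ as $n\to+\infty$; $\phi_n=\begin{bmatrix}z^{-n}[1+o(1)]\\ o(1)\end{bmatrix}$ as $n\to-\infty$; $\bar\psi_n=\begin{bmatrix}z^{-n}[1+o(1)]\\ o(1)\end{bmatrix}$ as $n\to+\infty$; $\bar\phi_n=\begin{bmatrix}o(1)\\ z^{n}[1+o(1)]\end{bmatrix}$ as $n\to-\infty$. The scattering coefficients are defined by $\psi_n=\begin{bmatrix}(L/T_{\rm l})z^{-n}[1+o(1)]\\ (1/T_{\rm l})z^{n}[1+o(1)]\end{bmatrix}$ as $n\to-\infty$; $\phi_n=\begin{bmatrix}(1/T_{\rm r})z^{-n}[1+o(1)]\\ (R/T_{\rm r})z^{n}[1+o(1)]\end{bmatrix}$ as $n\to+\infty$; $\bar\psi_n=\begin{bmatrix}(1/\bar T_{\rm l})z^{-n}[1+o(1)]\\ (\bar L/\bar T_{\rm l})z^{n}[1+o(1)]\end{bmatrix}$ as $n\to-\infty$; $\bar\phi_n=\begin{bmatrix}(\bar R/\bar T_{\rm r})z^{-n}[1+o(1)]\\ (1/\bar T_{\rm r})z^{n}[1+o(1)]\end{bmatrix}$ as $n\to+\infty$. *)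

From Stdlib Require Import Reals ZArith.
From Coquelicot Require Import Coquelicot.
Open Scope R_scope.

Definition Cpowz (z : C) (n : Z) : C :=
  match n with
  | Z0 => RtoC 1
  | Zpos p => Cpow z (Pos.to_nat p)
  | Zneg p => Cinv (Cpow z (Pos.to_nat p))
  end.

Definition on_circle (z : C) : Prop := Cmod z = 1.

Definition vanish_pinf (u : Z -> C) : Prop :=
  forall eps : R, 0 < eps -> exists N : Z, forall n : Z, (N <= n)%Z -> Cmod (u n) <= eps.
Definition vanish_minf (u : Z -> C) : Prop :=
  forall eps : R, 0 < eps -> exists N : Z, forall n : Z, (n <= N)%Z -> Cmod (u n) <= eps.

Definition rapid_decay (q : Z -> C) : Prop :=
  forall k : nat, vanish_pinf (fun n => RtoC (IZR (Z.abs n) ^ k) * q n)%C /\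
                  vanish_minf (fun n => RtoC (IZR (Z.abs n) ^ k) * q n)%C.

Definition is_solution (q r : Z -> C) (z : C) (f : Z -> C * C) : Prop :=
  forall n : Z,
    fst (f n) = (z * fst (f (n+1)%Z) + (z - / z) * q n * snd (f (n+1)%Z))%C /\
    snd (f n) = (z * r n * fst (f (n+1)%Z)
                 + (/ z + (z - / z) * q n * r n) * snd (f (n+1)%Z))%C.

(* f_n = [ a z^{-n}[1+o(1)] ; b z^n [1+o(1)] ]  as n -> +oo (resp. -oo);
   on the unit circle, with a coefficient a, "a z^{-n}[1+o(1)]" is written
   "a z^{-n} + o(1)" (same thing for a <> 0, the natural meaning of o(1) for a = 0) *)
Definition asymp_pinf (z : C) (f : Z -> C * C) (a b : C) : Prop :=
  vanish_pinf (fun n => fst (f n) - a * Cpowz z (- n))%C /\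
  vanish_pinf (fun n => snd (f n) - b * Cpowz z n)%C.
Definition asymp_minf (z : C) (f : Z -> C * C) (a b : C) : Prop :=
  vanish_minf (fun n => fst (f n) - a * Cpowz z (- n))%C /\
  vanish_minf (fun n => snd (f n) - b * Cpowz z n)%C.

(* At z on the unit circle, (Tl, L, Tr, R, Tbl, Lb, Tbr, Rb) are the scattering
   coefficients of the system: they come from the Jost solutions psi, phi, psib,
   phib (unique solutions with the prescribed asymptotics). *)
Definition scattering_coeffs (q r : Z -> C) (z : C)
    (Tl L Tr R Tbl Lb Tbr Rb : C) : Prop :=
  Tl <> RtoC 0 /\ Tr <> RtoC 0 /\ Tbl <> RtoC 0 /\ Tbr <> RtoC 0 /\
  exists psi phi psib phib : Z -> C * C,
    is_solution q r z psi /\ is_solution q r z phi /\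
    is_solution q r z psib /\ is_solution q r z phib /\
    asymp_pinf z psi (RtoC 0) (RtoC 1) /\
    asymp_minf z phi (RtoC 1) (RtoC 0) /\
    asymp_pinf z psib (RtoC 1) (RtoC 0) /\
    asymp_minf z phib (RtoC 0) (RtoC 1) /\
    asymp_minf z psi (L / Tl)%C (/ Tl)%C /\
    asymp_pinf z phi (/ Tr)%C (R / Tr)%C /\
    asymp_minf z psib (/ Tbl)%C (Lb / Tbl)%C /\
    asymp_pinf z phib (Rb / Tbr)%C (/ Tbr)%C.

Definition meromorphic_on (U : C -> Prop) (F : C -> C) (P : C -> Prop) : Prop :=
  (forall p, P p -> U p) /\
  (forall w, U w -> exists d : R, 0 < d /\
      forall p, P p -> p <> w -> d <= Cmod (p - w)%C) /\
  (forall w, U w -> ~ P w -> @ex_derive C_AbsRing C_NormedModule F w) /\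
  (forall p, P p -> exists (m : nat) (d M : R), 0 < d /\
      forall w, 0 < Cmod (w - p)%C < d -> Cmod (Cpow (w - p)%C m * F w)%C <= M).

(* T, given on the unit circle, has a meromorphic extension to the open set U
   whose boundary is the unit circle: a function meromorphic on U whose values
   tend to T(zeta) as w -> zeta (w in U, off the poles), for every zeta on the circle *)
Definition meromorphic_extension (U : C -> Prop) (T : C -> C) : Prop :=
  exists (F : C -> C) (P : C -> Prop),
    meromorphic_on U F P /\
    forall zeta, on_circle zeta ->
      forall eps : R, 0 < eps -> exists d : R, 0 < d /\
        forall w, U w -> ~ P w -> Cmod (w - zeta)%C < d -> Cmod (F w - T zeta)%C <= eps.

(* The Wronskian [f^1 g^2 - f^2 g^1] of two solutions does not depend on [n], because the
   transfer matrices have determinant 1; evaluating it at [+oo] and at [-oo] with the Jost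
   asymptotics gives [Tl = Tr], [Tbl = Tbr] and the relations of (b).
   For (a), the gauge [x_n = z^(-n) psi_n] gives a system whose transfer matrices are
   [diag(z^2, 1)] plus perturbations affine in [z^2] and summable in [n]. The products of these
   matrices from [-N] to [N] applied to [(0, 1)] are polynomials whose coefficients converge in
   l1, so their limit [A] is a power series with bounded coefficients, continuous on the closed
   disk and equal to [1 / Tl] on the circle. Each zero of [A] in the open disk has finite order:
   if all Taylor coefficients at [p] vanished, [A] would vanish on the disk of radius [1 - |p|]
   about [p], which touches the circle, where [A] does not vanish. Hence [Tl = 1 / A] is
   meromorphic. [Tbl] is treated in the same way, through [psib] and the variable [1 / z]. *)

From Stdlib Require Import Reals ZArith Lra Lia.
From Stdlib Require Import ClassicalEpsilon Classical FunctionalExtensionality.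
From Coquelicot Require Import Coquelicot.
Open Scope R_scope.

Lemma Cmod_minus_sym (x y : C) : Cmod (x - y) = Cmod (y - x).
Proof. replace (x - y)%C with (- (y - x))%C by ring. apply Cmod_opp. Qed.

Lemma Cmod_triangle_minus (x y z : C) : Cmod (x - z) <= Cmod (x - y) + Cmod (y - z).
Proof. replace (x - z)%C with ((x - y) + (y - z))%C by ring. apply Cmod_triangle. Qed.

Lemma Cmod_reverse_triangle (x y : C) : Cmod x - Cmod y <= Cmod (x - y).
Proof.
  pose proof (Cmod_triangle (x - y) y) as H.
  replace (x - y + y)%C with x in H by ring. lra.
Qed.

Lemma Cmult_integral (a b : C) : (a * b)%C = RtoC 0 -> a = RtoC 0 \/ b = RtoC 0.
Proof.
  intros H. assert (Cmod a * Cmod b = 0) by (rewrite <- Cmod_mult, H; apply Cmod_0).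
  apply Rmult_integral in H0. destruct H0; [left|right]; apply Cmod_eq_0; auto.
Qed.

Lemma Cinv_neq_0 (a : C) : a <> RtoC 0 -> (/ a)%C <> RtoC 0.
Proof.
  intros Ha E. apply Cmod_gt_0 in Ha. assert (H : Cmod (/ a) = 0) by (rewrite E; apply Cmod_0).
  rewrite Cmod_inv in H by (intro H0; rewrite H0, Cmod_0 in Ha; lra).
  pose proof (Rinv_0_lt_compat _ Ha). lra.
Qed.

Lemma Cinv_inj (a b : C) : a <> RtoC 0 -> b <> RtoC 0 -> (/ a)%C = (/ b)%C -> a = b.
Proof. intros Ha Hb H. replace a with (/ / a)%C by (field; auto). rewrite H. field. auto. Qed.

Lemma Cmod_Cpow_le_1 (z : C) (n : nat) : Cmod z <= 1 -> Cmod (Cpow z n) <= 1.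
Proof.
  intros Hz. rewrite Cmod_pow. pose proof (Cmod_ge_0 z).
  induction n as [|n IH]; simpl; [lra|]. pose proof (pow_le (Cmod z) n H). nra.
Qed.

Fixpoint csum (f : nat -> C) (n : nat) : C :=
  match n with O => RtoC 0 | S n => (csum f n + f n)%C end.
Fixpoint rsum (f : nat -> R) (n : nat) : R :=
  match n with O => 0 | S n => rsum f n + f n end.

Lemma csum_ext f g n : (forall k, (k < n)%nat -> f k = g k) -> csum f n = csum g n.
Proof.
  induction n; simpl; intros H; auto.
  rewrite IHn by (intros; apply H; lia). rewrite H; auto.
Qed.

Lemma rsum_le f g n : (forall k, (k < n)%nat -> f k <= g k) -> rsum f n <= rsum g n.
Proof.
  induction n; simpl; intros H; [lra|].
  pose proof (H n ltac:(lia)). assert (rsum f n <= rsum g n) by (apply IHn; intros; apply H; lia). lra.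
Qed.

Lemma rsum_nonneg f n : (forall k, (k < n)%nat -> 0 <= f k) -> 0 <= rsum f n.
Proof.
  induction n; simpl; intros H; [lra|].
  pose proof (H n ltac:(lia)). assert (0 <= rsum f n) by (apply IHn; intros; apply H; lia). lra.
Qed.

Lemma csum_plus f g n : csum (fun k => f k + g k)%C n = (csum f n + csum g n)%C.
Proof. induction n; simpl; [ring|]. rewrite IHn. ring. Qed.
Lemma csum_minus f g n : csum (fun k => f k - g k)%C n = (csum f n - csum g n)%C.
Proof. induction n; simpl; [ring|]. rewrite IHn. ring. Qed.
Lemma csum_scal a f n : csum (fun k => a * f k)%C n = (a * csum f n)%C.
Proof. induction n; simpl; [ring|]. rewrite IHn. ring. Qed.
Lemma rsum_plus f g n : rsum (fun k => f k + g k) n = rsum f n + rsum g n.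
Proof. induction n; simpl; [ring|]. rewrite IHn. ring. Qed.
Lemma rsum_scal a f n : rsum (fun k => a * f k) n = a * rsum f n.
Proof. induction n; simpl; [ring|]. rewrite IHn. ring. Qed.
Lemma rsum_const a n : rsum (fun _ => a) n = INR n * a.
Proof. induction n; simpl rsum; [simpl; ring|]. rewrite IHn, S_INR. ring. Qed.

Lemma csum_split f n m : csum f (n + m) = (csum f n + csum (fun k => f (n + k)%nat) m)%C.
Proof.
  induction m; simpl; [rewrite Nat.add_0_r; ring|].
  rewrite Nat.add_succ_r. simpl. rewrite IHm. ring.
Qed.

Lemma Cmod_csum_le f n : Cmod (csum f n) <= rsum (fun k => Cmod (f k)) n.
Proof.
  induction n; simpl; [rewrite Cmod_0; lra|].
  eapply Rle_trans; [apply Cmod_triangle|lra].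
Qed.

Lemma rsum_geom_le (x : R) n : 0 <= x < 1 -> rsum (fun k => x ^ k) n <= / (1 - x).
Proof.
  intros Hx.
  assert (Hs : forall n, rsum (fun k => x ^ k) n * (1 - x) = 1 - x ^ n).
  { induction n0; simpl; [ring|]. rewrite Rmult_plus_distr_r, IHn0. ring. }
  apply (Rmult_le_reg_r (1 - x)); [lra|]. rewrite Hs, Rinv_l by lra.
  pose proof (pow_le x n ltac:(lra)). lra.
Qed.

Definition Cseq_cv (u : nat -> C) (l : C) : Prop :=
  forall eps, 0 < eps -> exists N, forall n, (N <= n)%nat -> Cmod (u n - l) <= eps.

Lemma Cmod_le_eps_eq (x y : C) : (forall eps, 0 < eps -> Cmod (x - y) <= eps) -> x = y.
Proof.
  intros H. replace x with ((x - y) + y)%C by ring.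
  replace (x - y)%C with (RtoC 0); [ring|]. symmetry. apply Cmod_eq_0.
  apply Rle_antisym; [|apply Cmod_ge_0]. apply Rnot_lt_le. intro Hl.
  specialize (H (Cmod (x - y) / 2) ltac:(lra)). lra.
Qed.

Lemma Cseq_cv_unique u l1 l2 : Cseq_cv u l1 -> Cseq_cv u l2 -> l1 = l2.
Proof.
  intros H1 H2. apply Cmod_le_eps_eq. intros e He.
  destruct (H1 (e / 2)) as [N1 HN1]; [lra|]. destruct (H2 (e / 2)) as [N2 HN2]; [lra|].
  specialize (HN1 (N1 + N2)%nat ltac:(lia)). specialize (HN2 (N1 + N2)%nat ltac:(lia)).
  pose proof (Cmod_triangle_minus l1 (u (N1 + N2)%nat) l2).
  rewrite (Cmod_minus_sym l1 (u _)) in H. lra.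
Qed.

Lemma Cseq_cv_Cmod_le u l b :
  Cseq_cv u l -> (exists N, forall n, (N <= n)%nat -> Cmod (u n) <= b) -> Cmod l <= b.
Proof.
  intros H [N HN]. apply Rnot_lt_le. intro Hl.
  destruct (H ((Cmod l - b) / 2)) as [N1 HN1]; [lra|].
  specialize (HN1 (N + N1)%nat ltac:(lia)). specialize (HN (N + N1)%nat ltac:(lia)).
  pose proof (Cmod_reverse_triangle l (u (N + N1)%nat)). rewrite Cmod_minus_sym in H0. lra.
Qed.

Lemma Cseq_cv_dist_le u l x b :
  Cseq_cv u l -> (exists N, forall n, (N <= n)%nat -> Cmod (u n - x) <= b) -> Cmod (l - x) <= b.
Proof.
  intros H HN. apply (Cseq_cv_Cmod_le (fun n => u n - x)%C); auto.
  intros eps He. destruct (H eps He) as [N HN2]. exists N. intros n Hn.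
  replace (u n - x - (l - x))%C with (u n - l)%C by ring. auto.
Qed.

Lemma Cseq_cv_ext u v l : (forall n, u n = v n) -> Cseq_cv u l -> Cseq_cv v l.
Proof. intros H Hu eps He. destruct (Hu eps He) as [N HN]. exists N. intros. rewrite <- H. auto. Qed.

Lemma Cseq_cv_minus u v a b :
  Cseq_cv u a -> Cseq_cv v b -> Cseq_cv (fun n => u n - v n)%C (a - b)%C.
Proof.
  intros Hu Hv eps He.
  destruct (Hu (eps / 2)) as [N1 H1]; [lra|]. destruct (Hv (eps / 2)) as [N2 H2]; [lra|].
  exists (N1 + N2)%nat. intros n Hn.
  specialize (H1 n ltac:(lia)). specialize (H2 n ltac:(lia)).
  pose proof (Cmod_triangle_minus (u n - v n) (a - v n) (a - b)).
  replace (u n - v n - (a - v n))%C with (u n - a)%C in H by ring.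
  replace (a - v n - (a - b))%C with (- (v n - b))%C in H by ring. rewrite Cmod_opp in H. lra.
Qed.

Lemma Cseq_cv_scal u a c : Cseq_cv u a -> Cseq_cv (fun n => c * u n)%C (c * a)%C.
Proof.
  intros Hu eps He. pose proof (Cmod_ge_0 c).
  destruct (Hu (eps / (Cmod c + 1))) as [N H1]; [apply Rdiv_lt_0_compat; lra|].
  exists N. intros n Hn. replace (c * u n - c * a)%C with (c * (u n - a))%C by ring.
  rewrite Cmod_mult. specialize (H1 n Hn).
  apply Rle_trans with ((Cmod c + 1) * (eps / (Cmod c + 1))); [|right; field; lra].
  pose proof (Cmod_ge_0 (u n - a)). nra.
Qed.

Lemma Cmod_le_Rabs_Re_Im (c : C) : Cmod c <= Rabs (Re c) + Rabs (Im c).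
Proof.
  destruct c as [a b]. unfold Cmod; simpl.
  pose proof (Rabs_pos a); pose proof (Rabs_pos b).
  rewrite <- (sqrt_pow2 (Rabs a + Rabs b)) by lra. apply sqrt_le_1_alt.
  pose proof (pow2_abs a); pose proof (pow2_abs b). simpl in *. nra.
Qed.

Lemma Rabs_Im_le_Cmod (c : C) : Rabs (Im c) <= Cmod c.
Proof.
  destruct c as [a b]. unfold Cmod; simpl. rewrite <- sqrt_Rsqr_abs.
  apply sqrt_le_1_alt. unfold Rsqr; nra.
Qed.

Lemma Cseq_cauchy_cv (u : nat -> C) :
  (forall eps, 0 < eps -> exists N, forall n m, (N <= n)%nat -> (N <= m)%nat -> Cmod (u n - u m) <= eps) ->
  exists l, Cseq_cv u l.
Proof.
  intros H.
  assert (Hre : Cauchy_crit (fun n => Re (u n))).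
  { intros eps He. destruct (H (eps / 2)) as [N HN]; [lra|]. exists N. intros n m Hn Hm.
    specialize (HN n m Hn Hm). pose proof (re_le_Cmod (u n - u m)%C).
    replace (Re (u n - u m)) with (Re (u n) - Re (u m)) in H0 by (destruct (u n), (u m); unfold Cminus, Cplus, Copp, Re, Im; simpl; ring).
    unfold Rdist. lra. }
  assert (Him : Cauchy_crit (fun n => Im (u n))).
  { intros eps He. destruct (H (eps / 2)) as [N HN]; [lra|]. exists N. intros n m Hn Hm.
    specialize (HN n m Hn Hm). pose proof (Rabs_Im_le_Cmod (u n - u m)%C).
    replace (Im (u n - u m)) with (Im (u n) - Im (u m)) in H0 by (destruct (u n), (u m); unfold Cminus, Cplus, Copp, Re, Im; simpl; ring).
    unfold Rdist. lra. }
  destruct (Rcomplete.R_complete _ Hre) as [a Ha]. destruct (Rcomplete.R_complete _ Him) as [b Hb].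
  exists (a, b). intros eps He.
  destruct (Ha (eps / 2)) as [N1 H1]; [lra|]. destruct (Hb (eps / 2)) as [N2 H2]; [lra|].
  exists (N1 + N2)%nat. intros n Hn. specialize (H1 n ltac:(lia)). specialize (H2 n ltac:(lia)).
  unfold Rdist in *. eapply Rle_trans; [apply Cmod_le_Rabs_Re_Im|].
  replace (Re (u n - (a, b))) with (Re (u n) - a) by (destruct (u n); unfold Cminus, Cplus, Copp, Re; simpl; ring).
  replace (Im (u n - (a, b))) with (Im (u n) - b) by (destruct (u n); unfold Cminus, Cplus, Copp, Im; simpl; ring).
  lra.
Qed.

(* Junk value [0] for divergent sequences. *)
Definition Cseq_lim (u : nat -> C) : C :=
  match excluded_middle_informative (exists l, Cseq_cv u l) with
  | left H => proj1_sig (constructive_indefinite_description _ H)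
  | right _ => RtoC 0
  end.

Lemma Cseq_lim_correct u : (exists l, Cseq_cv u l) -> Cseq_cv u (Cseq_lim u).
Proof.
  intros H. unfold Cseq_lim. destruct excluded_middle_informative; [|tauto].
  destruct constructive_indefinite_description. auto.
Qed.

Lemma Cseq_cauchy_lim (u : nat -> C) (b : nat -> R) :
  (forall n m, (n <= m)%nat -> Cmod (u m - u n) <= b n) ->
  (forall eps, 0 < eps -> exists N, forall n, (N <= n)%nat -> b n <= eps) ->
  Cseq_cv u (Cseq_lim u) /\ forall n, Cmod (u n - Cseq_lim u) <= b n.
Proof.
  intros Hu Hb.
  assert (Hcv : Cseq_cv u (Cseq_lim u)).
  { apply Cseq_lim_correct, Cseq_cauchy_cv. intros e He. destruct (Hb e He) as [N HN].
    exists N. intros n m Hn Hm. destruct (le_lt_dec n m) as [Hnm|Hmn].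
    - rewrite Cmod_minus_sym. eapply Rle_trans; [apply Hu; auto|auto].
    - eapply Rle_trans; [apply Hu; lia|auto]. }
  split; auto. intros n. rewrite Cmod_minus_sym. apply (Cseq_cv_dist_le u); auto.
  exists n. auto.
Qed.

Lemma pow_cv_0 (x : R) : 0 <= x < 1 ->
  forall eps, 0 < eps -> exists N, forall n, (N <= n)%nat -> x ^ n <= eps.
Proof.
  intros Hx eps He.
  destruct (pow_lt_1_zero x ltac:(rewrite Rabs_right; lra) eps He) as [N HN].
  exists N. intros n Hn. specialize (HN n Hn). pose proof (pow_le x n ltac:(lra)).
  rewrite Rabs_right in HN; lra.
Qed.

(* Writing [x = y^2], [n y^n] is bounded by Bernoulli's inequality, and [y^n -> 0]. *)
Lemma INR_mult_pow_cv_0 (x : R) : 0 <= x < 1 ->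
  forall eps, 0 < eps -> exists N, forall n, (N <= n)%nat -> INR n * x ^ n <= eps.
Proof.
  intros Hx eps He.
  destruct (Req_dec x 0) as [Hx0|Hx0].
  { exists 1%nat. intros n Hn. subst. rewrite pow_i by lia. lra. }
  set (y := sqrt x).
  assert (Hy : 0 < y < 1).
  { unfold y. split; [apply sqrt_lt_R0; lra|]. rewrite <- sqrt_1. apply sqrt_lt_1; lra. }
  set (s := / y - 1).
  assert (Hs : 0 < s).
  { unfold s. assert (1 < / y) by (rewrite <- Rinv_1; apply Rinv_lt_contravar; lra). lra. }
  assert (Hb : forall n, INR n * y ^ n <= / s).
  { intros n. pose proof (Rle_pow_lin s n ltac:(lra)) as H.
    replace (1 + s) with (/ y) in H by (unfold s; ring). rewrite pow_inv in H.
    assert (0 < y ^ n) by (apply pow_lt; lra).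
    apply Rmult_le_reg_l with s; auto. rewrite Rinv_r by lra.
    apply Rmult_le_reg_r with (/ y ^ n); [apply Rinv_0_lt_compat; auto|].
    replace (s * (INR n * y ^ n) * / y ^ n) with (INR n * s) by (field; lra). lra. }
  destruct (pow_cv_0 y ltac:(lra) (eps * s)) as [N HN]; [apply Rmult_lt_0_compat; auto|].
  exists N. intros n Hn. specialize (HN n Hn). specialize (Hb n).
  replace (x ^ n) with (y ^ n * y ^ n) by (rewrite <- Rpow_mult_distr; unfold y; rewrite sqrt_sqrt; lra).
  assert (0 <= y ^ n) by (apply pow_le; lra).
  apply Rle_trans with (/ s * y ^ n).
  - replace (INR n * (y ^ n * y ^ n)) with ((INR n * y ^ n) * y ^ n) by ring. apply Rmult_le_compat_r; auto.
  - apply Rmult_le_reg_l with s; auto. rewrite <- Rmult_assoc, Rinv_r by lra. lra.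
Qed.

(** * The Wronskian and the scattering relations on the circle *)

Lemma Cpowz_spec z n :
  Cpowz z n = if Z_le_dec 0 n then Cpow z (Z.to_nat n) else (/ Cpow z (Z.to_nat (- n)))%C.
Proof. destruct (Z_le_dec 0 n); destruct n; simpl; try reflexivity; lia. Qed.

Lemma Cpowz_succ z n : z <> RtoC 0 -> Cpowz z (n + 1) = (z * Cpowz z n)%C.
Proof.
  intros Hz. rewrite !Cpowz_spec.
  destruct (Z_le_dec 0 n), (Z_le_dec 0 (n + 1)); try lia.
  - replace (Z.to_nat (n + 1)) with (S (Z.to_nat n)) by lia. reflexivity.
  - assert (n = -1)%Z by lia. subst. simpl. field. auto.
  - replace (Z.to_nat (- n)) with (S (Z.to_nat (- (n + 1)))) by lia. simpl.
    field. split; auto. apply Cpow_nz; auto.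
Qed.

Lemma Cmod_Cpowz z n : Cmod z = 1 -> Cmod (Cpowz z n) = 1.
Proof.
  intros Hz. assert (Hz0 : z <> RtoC 0) by (apply Cmod_gt_0; lra).
  rewrite Cpowz_spec. destruct Z_le_dec.
  - rewrite Cmod_pow, Hz. apply pow1.
  - rewrite Cmod_inv by (apply Cpow_nz; auto). rewrite Cmod_pow, Hz, pow1. apply Rinv_1.
Qed.

Lemma Cpowz_opp_mult z n : z <> RtoC 0 -> (Cpowz z (- n) * Cpowz z n)%C = RtoC 1.
Proof.
  intros Hz. rewrite !Cpowz_spec.
  destruct (Z_le_dec 0 (- n)), (Z_le_dec 0 n); try lia.
  - assert (n = 0)%Z by lia. subst. simpl. ring.
  - replace (- - n)%Z with n by lia. field. apply Cpow_nz; auto.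
  - replace (- - n)%Z with n by lia. field. apply Cpow_nz; auto.
Qed.

Definition wronskian (f g : Z -> C * C) (n : Z) : C :=
  (fst (f n) * snd (g n) - snd (f n) * fst (g n))%C.

(* The transfer matrix of the system has determinant 1. *)
Lemma wronskian_succ q r z f g n : z <> RtoC 0 ->
  is_solution q r z f -> is_solution q r z g -> wronskian f g (n + 1) = wronskian f g n.
Proof.
  intros Hz Hf Hg. unfold wronskian.
  destruct (Hf n) as [F1 F2], (Hg n) as [G1 G2]. rewrite F1, F2, G1, G2. field. auto.
Qed.

Lemma Z_succ_invariant_const (w : Z -> C) : (forall n, w (n + 1)%Z = w n) -> forall n, w n = w 0%Z.
Proof.
  intros H n. induction n using Z.peano_ind; auto.
  - rewrite <- Z.add_1_r, H. auto.
  - rewrite <- IHn, <- (H (Z.pred n)). f_equal. lia.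
Qed.

Section Eventually.

Variable ev : (Z -> Prop) -> Prop.
Hypothesis ev_and : forall P Q, ev P -> ev Q -> ev (fun n => P n /\ Q n).
Hypothesis ev_imp : forall (P Q : Z -> Prop), (forall n, P n -> Q n) -> ev P -> ev Q.
Hypothesis ev_ex : forall P, ev P -> exists n, P n.

Definition ev_vanish (u : Z -> C) := forall eps, 0 < eps -> ev (fun n => Cmod (u n) <= eps).

Lemma ev_vanish_ext u v : (forall n, u n = v n) -> ev_vanish u -> ev_vanish v.
Proof. intros H Hu eps He. eapply ev_imp; [|apply (Hu eps He)]. intros n. simpl. rewrite H. auto. Qed.

Lemma ev_vanish_plus u v : ev_vanish u -> ev_vanish v -> ev_vanish (fun n => u n + v n)%C.
Proof.
  intros Hu Hv eps He. eapply ev_imp; [|apply (ev_and _ _ (Hu (eps / 2) ltac:(lra)) (Hv (eps / 2) ltac:(lra)))].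
  intros n [H1 H2]. simpl in *. pose proof (Cmod_triangle (u n) (v n)). lra.
Qed.

Lemma ev_vanish_bounded_mult w M u :
  (forall n, Cmod (w n) <= M) -> ev_vanish u -> ev_vanish (fun n => w n * u n)%C.
Proof.
  intros Hw Hu eps He. assert (HM : 0 <= M) by (specialize (Hw 0%Z); pose proof (Cmod_ge_0 (w 0%Z)); lra).
  eapply ev_imp; [|apply (Hu (eps / (M + 1))); apply Rdiv_lt_0_compat; lra].
  intros n Hn. simpl in Hn. rewrite Cmod_mult.
  apply Rle_trans with ((M + 1) * (eps / (M + 1))); [|right; field; lra].
  specialize (Hw n). pose proof (Cmod_ge_0 (u n)). pose proof (Cmod_ge_0 (w n)). nra.
Qed.

Lemma ev_vanish_unit_mult w u v : (forall n, Cmod (w n) = 1) ->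
  (forall n, v n = (w n * u n)%C) -> ev_vanish u -> ev_vanish v.
Proof.
  intros Hw Hv Hu. apply ev_vanish_ext with (fun n => w n * u n)%C; [intros; auto|].
  apply ev_vanish_bounded_mult with 1; auto. intros n. rewrite Hw. lra.
Qed.

Lemma ev_vanish_mult u v : ev_vanish u -> ev_vanish v -> ev_vanish (fun n => u n * v n)%C.
Proof.
  intros Hu Hv eps He.
  eapply ev_imp; [|apply (ev_and _ _ (Hu (Rmin 1 eps) ltac:(apply Rmin_pos; lra)) (Hv eps He))].
  intros n [H1 H2]. simpl in *. rewrite Cmod_mult. pose proof (Rmin_l 1 eps).
  pose proof (Cmod_ge_0 (u n)). pose proof (Cmod_ge_0 (v n)). nra.
Qed.

Lemma ev_vanish_const_eq (x y : C) : ev_vanish (fun _ => x - y)%C -> x = y.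
Proof.
  intros H. apply Cmod_le_eps_eq. intros eps He. destruct (ev_ex _ (H eps He)). auto.
Qed.

(* With [e1 .. e4] the four remainders of the asymptotics of [f] and [g], the Wronskian
   minus its limit is a combination of remainders with coefficients of modulus 1. *)
Lemma wronskian_ev_vanish z f g a b c d : Cmod z = 1 ->
  ev_vanish (fun n => fst (f n) - a * Cpowz z (- n))%C ->
  ev_vanish (fun n => snd (f n) - b * Cpowz z n)%C ->
  ev_vanish (fun n => fst (g n) - c * Cpowz z (- n))%C ->
  ev_vanish (fun n => snd (g n) - d * Cpowz z n)%C ->
  ev_vanish (fun n => wronskian f g n - (a * d - b * c))%C.
Proof.
  intros Hz H1 H2 H3 H4. assert (Hz0 : z <> RtoC 0) by (apply Cmod_gt_0; lra).
  set (e1 := fun n => (fst (f n) - a * Cpowz z (- n))%C) in *.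
  set (e2 := fun n => (snd (f n) - b * Cpowz z n)%C) in *.
  set (e3 := fun n => (fst (g n) - c * Cpowz z (- n))%C) in *.
  set (e4 := fun n => (snd (g n) - d * Cpowz z n)%C) in *.
  assert (Hbnd : forall k (x : C), Cmod (x * Cpowz z k) <= Cmod x).
  { intros k x. rewrite Cmod_mult, Cmod_Cpowz by auto. lra. }
  assert (Hopp : forall u, ev_vanish u -> ev_vanish (fun n => - u n)%C).
  { intros u Hu eps He. eapply ev_imp; [|apply (Hu eps He)]. intros n. simpl. rewrite Cmod_opp. auto. }
  apply ev_vanish_ext with (fun n =>
     (a * Cpowz z (- n)) * e4 n + (d * Cpowz z n) * e1 n + e1 n * e4 n
     + ((- b * Cpowz z n) * e3 n + (- c * Cpowz z (- n)) * e2 n + - e2 n * e3 n))%C.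
  { intros n. pose proof (Cpowz_opp_mult z n Hz0) as Hm. unfold e1, e2, e3, e4, wronskian.
    replace (a * d - b * c)%C with
      (a * d * (Cpowz z (- n) * Cpowz z n) - b * c * (Cpowz z (- n) * Cpowz z n))%C by (rewrite Hm; ring).
    ring. }
  repeat apply ev_vanish_plus.
  all: first [ solve [apply ev_vanish_mult; auto]
             | solve [eapply ev_vanish_bounded_mult; [intros n; apply Hbnd|auto]] ].
Qed.

Lemma wronskian_ev_value q r z f g a b c d : Cmod z = 1 ->
  is_solution q r z f -> is_solution q r z g ->
  ev_vanish (fun n => fst (f n) - a * Cpowz z (- n))%C ->
  ev_vanish (fun n => snd (f n) - b * Cpowz z n)%C ->
  ev_vanish (fun n => fst (g n) - c * Cpowz z (- n))%C ->
  ev_vanish (fun n => snd (g n) - d * Cpowz z n)%C ->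
  wronskian f g 0%Z = (a * d - b * c)%C.
Proof.
  intros Hz Hf Hg H1 H2 H3 H4. assert (Hz0 : z <> RtoC 0) by (apply Cmod_gt_0; lra).
  apply ev_vanish_const_eq. apply ev_vanish_ext with (fun n => wronskian f g n - (a * d - b * c))%C.
  - intros n. rewrite (Z_succ_invariant_const (wronskian f g)); auto.
    intros m. apply (wronskian_succ q r z); auto.
  - apply (wronskian_ev_vanish z); auto.
Qed.

End Eventually.

Definition ev_pinf (P : Z -> Prop) := exists N, forall n, (N <= n)%Z -> P n.
Definition ev_minf (P : Z -> Prop) := exists N, forall n, (n <= N)%Z -> P n.

Lemma ev_pinf_and P Q : ev_pinf P -> ev_pinf Q -> ev_pinf (fun n => P n /\ Q n).
Proof. intros [N1 HP] [N2 HQ]. exists (Z.max N1 N2). intros n Hn. split; [apply HP|apply HQ]; lia. Qed.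
Lemma ev_minf_and P Q : ev_minf P -> ev_minf Q -> ev_minf (fun n => P n /\ Q n).
Proof. intros [N1 HP] [N2 HQ]. exists (Z.min N1 N2). intros n Hn. split; [apply HP|apply HQ]; lia. Qed.
Lemma ev_pinf_imp (P Q : Z -> Prop) : (forall n, P n -> Q n) -> ev_pinf P -> ev_pinf Q.
Proof. intros H [N HN]. exists N. auto. Qed.
Lemma ev_minf_imp (P Q : Z -> Prop) : (forall n, P n -> Q n) -> ev_minf P -> ev_minf Q.
Proof. intros H [N HN]. exists N. auto. Qed.
Lemma ev_pinf_ex P : ev_pinf P -> exists n, P n.
Proof. intros [N HN]. exists N. apply HN. lia. Qed.
Lemma ev_minf_ex P : ev_minf P -> exists n, P n.
Proof. intros [N HN]. exists N. apply HN. lia. Qed.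

Lemma wronskian_asymp_pinf q r z f g a b c d : Cmod z = 1 ->
  is_solution q r z f -> is_solution q r z g ->
  asymp_pinf z f a b -> asymp_pinf z g c d -> wronskian f g 0%Z = (a * d - b * c)%C.
Proof.
  intros Hz Hf Hg [H1 H2] [H3 H4].
  exact (wronskian_ev_value ev_pinf ev_pinf_and ev_pinf_imp ev_pinf_ex q r z f g a b c d Hz Hf Hg H1 H2 H3 H4).
Qed.

Lemma wronskian_asymp_minf q r z f g a b c d : Cmod z = 1 ->
  is_solution q r z f -> is_solution q r z g ->
  asymp_minf z f a b -> asymp_minf z g c d -> wronskian f g 0%Z = (a * d - b * c)%C.
Proof.
  intros Hz Hf Hg [H1 H2] [H3 H4].
  exact (wronskian_ev_value ev_minf ev_minf_and ev_minf_imp ev_minf_ex q r z f g a b c d Hz Hf Hg H1 H2 H3 H4).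
Qed.

(* Each relation is the value of one Wronskian computed once at [+oo] and once at [-oo]. *)
Lemma scattering_relations q r z Tl L Tr R Tbl Lb Tbr Rb : on_circle z ->
  scattering_coeffs q r z Tl L Tr R Tbl Lb Tbr Rb ->
  (Tl = Tr /\ Tbl = Tbr) /\
  (L / Tl = - (Rb / Tbl))%C /\ (Lb / Tbl = - (R / Tl))%C /\
  (Tl * Tbl = 1 - L * Lb)%C /\ (Tl * Tbl = 1 - R * Rb)%C.
Proof.
  intros Hz (HTl & HTr & HTbl & HTbr & psi & phi & psib & phib & Spsi & Sphi & Spsib & Sphib &
     Ppsi & Mphi & Ppsib & Mphib & Mpsi & Pphi & Mpsib & Pphib).
  unfold on_circle in Hz.
  assert (W_phi_psi := eq_trans (eq_sym (wronskian_asymp_minf q r z phi psi _ _ _ _ Hz Sphi Spsi Mphi Mpsi))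
                                (wronskian_asymp_pinf q r z phi psi _ _ _ _ Hz Sphi Spsi Pphi Ppsi)).
  assert (W_psib_phib := eq_trans (eq_sym (wronskian_asymp_pinf q r z psib phib _ _ _ _ Hz Spsib Sphib Ppsib Pphib))
                                  (wronskian_asymp_minf q r z psib phib _ _ _ _ Hz Spsib Sphib Mpsib Mphib)).
  assert (W_psi_psib := eq_trans (eq_sym (wronskian_asymp_pinf q r z psi psib _ _ _ _ Hz Spsi Spsib Ppsi Ppsib))
                                 (wronskian_asymp_minf q r z psi psib _ _ _ _ Hz Spsi Spsib Mpsi Mpsib)).
  assert (W_phi_phib := eq_trans (eq_sym (wronskian_asymp_minf q r z phi phib _ _ _ _ Hz Sphi Sphib Mphi Mphib))
                                 (wronskian_asymp_pinf q r z phi phib _ _ _ _ Hz Sphi Sphib Pphi Pphib)).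
  assert (W_psi_phib := eq_trans (eq_sym (wronskian_asymp_pinf q r z psi phib _ _ _ _ Hz Spsi Sphib Ppsi Pphib))
                                 (wronskian_asymp_minf q r z psi phib _ _ _ _ Hz Spsi Sphib Mpsi Mphib)).
  assert (W_phi_psib := eq_trans (eq_sym (wronskian_asymp_minf q r z phi psib _ _ _ _ Hz Sphi Spsib Mphi Mpsib))
                                 (wronskian_asymp_pinf q r z phi psib _ _ _ _ Hz Sphi Spsib Pphi Ppsib)).
  assert (ETl : Tl = Tr).
  { apply Cinv_inj; auto. transitivity (1 * / Tl - 0 * (L / Tl))%C; [ring|].
    rewrite W_phi_psi. ring. }
  assert (ETbl : Tbl = Tbr).
  { apply Cinv_inj; auto. transitivity (/ Tbl * 1 - Lb / Tbl * 0)%C; [ring|].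
    rewrite <- W_psib_phib. ring. }
  subst Tr Tbr. split; [auto|]. split; [|split; [|split]].
  - transitivity (L / Tl * 1 - / Tl * 0)%C; [ring|]. rewrite <- W_psi_phib. ring.
  - transitivity (1 * (Lb / Tbl) - 0 * / Tbl)%C; [ring|]. rewrite W_phi_psib. ring.
  - apply (f_equal (fun x => x * Tl * Tbl)%C) in W_psi_psib.
    replace ((L / Tl * (Lb / Tbl) - / Tl * / Tbl) * Tl * Tbl)%C with (L * Lb - 1)%C in W_psi_psib
      by (field; auto).
    replace (1 - L * Lb)%C with (- (L * Lb - 1))%C by ring. rewrite <- W_psi_psib. ring.
  - apply (f_equal (fun x => x * Tl * Tbl)%C) in W_phi_phib.
    replace ((/ Tl * / Tbl - R / Tl * (Rb / Tbl)) * Tl * Tbl)%C with (1 - R * Rb)%C in W_phi_phib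
      by (field; auto).
    rewrite <- W_phi_phib. ring.
Qed.

Definition Ccontinuous_within (D : C -> Prop) (f : C -> C) (w : C) :=
  forall e, 0 < e -> exists dl, 0 < dl /\
    forall z, D z -> Cmod (z - w) < dl -> Cmod (f z - f w) <= e.

Lemma Ccontinuous_within_const D a w : Ccontinuous_within D (fun _ => a) w.
Proof.
  intros e He. exists 1. split; [lra|]. intros.
  replace (a - a)%C with (RtoC 0) by ring. rewrite Cmod_0; lra.
Qed.

Lemma Ccontinuous_within_mult D f g w :
  Ccontinuous_within D f w -> Ccontinuous_within D g w ->
  Ccontinuous_within D (fun z => f z * g z)%C w.
Proof.
  intros Hf Hg e He.
  set (a := Cmod (f w)). set (b := Cmod (g w)).
  assert (Ha : 0 <= a) by apply Cmod_ge_0. assert (Hb : 0 <= b) by apply Cmod_ge_0.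
  set (eta := Rmin 1 (e / (a + b + 1))).
  assert (Heta : 0 < eta) by (apply Rmin_pos; [lra|apply Rdiv_lt_0_compat; lra]).
  assert (Heta1 : eta <= 1) by apply Rmin_l.
  assert (Heta2 : eta * (a + b + 1) <= e).
  { apply Rle_trans with (e / (a + b + 1) * (a + b + 1)); [|right; field; lra].
    apply Rmult_le_compat_r; [lra|apply Rmin_r]. }
  destruct (Hf eta Heta) as [d1 [Hd1 H1]]. destruct (Hg eta Heta) as [d2 [Hd2 H2]].
  exists (Rmin d1 d2). split; [apply Rmin_pos; auto|]. intros z Dz Hz.
  specialize (H1 z Dz ltac:(eapply Rlt_le_trans; [exact Hz|apply Rmin_l])).
  specialize (H2 z Dz ltac:(eapply Rlt_le_trans; [exact Hz|apply Rmin_r])).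
  replace (f z * g z - f w * g w)%C
    with ((f z - f w) * (g z - g w) + (f z - f w) * g w + f w * (g z - g w))%C by ring.
  eapply Rle_trans; [apply Cmod_triangle|].
  eapply Rle_trans; [apply Rplus_le_compat_r, Cmod_triangle|].
  rewrite !Cmod_mult. fold a b.
  pose proof (Cmod_ge_0 (f z - f w)). pose proof (Cmod_ge_0 (g z - g w)).
  assert (Cmod (f z - f w) * Cmod (g z - g w) <= eta) by nra.
  assert (Cmod (f z - f w) * b <= eta * b) by nra. assert (a * Cmod (g z - g w) <= a * eta) by nra.
  nra.
Qed.

Lemma Ccontinuous_within_inv D f w : f w <> RtoC 0 ->
  Ccontinuous_within D f w -> Ccontinuous_within D (fun z => / f z)%C w.
Proof.
  intros Hw Hf e He.
  set (a := Cmod (f w)). assert (Ha : 0 < a) by (apply Cmod_gt_0; auto).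
  set (eta := Rmin (a / 2) (e * a * a / 2)).
  assert (Heta : 0 < eta).
  { apply Rmin_pos; [lra|]. assert (0 < e * a * a) by (repeat apply Rmult_lt_0_compat; auto). lra. }
  destruct (Hf eta Heta) as [d1 [Hd1 H1]]. exists d1. split; auto. intros z Dz Hz. specialize (H1 z Dz Hz).
  assert (Hfz : a / 2 <= Cmod (f z)).
  { pose proof (Cmod_reverse_triangle (f w) (f z)). rewrite Cmod_minus_sym in H.
    assert (eta <= a / 2) by apply Rmin_l. fold a in H. lra. }
  assert (f z <> RtoC 0) by (apply Cmod_gt_0; lra).
  replace (/ f z - / f w)%C with ((f w - f z) * / (f z * f w))%C by (field; auto).
  rewrite Cmod_mult, Cmod_inv, Cmod_mult by (apply Cmult_neq_0; auto). fold a. rewrite Cmod_minus_sym.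
  assert (Cmod (f z - f w) <= e * a * a / 2) by (eapply Rle_trans; [exact H1|apply Rmin_r]).
  assert (a * a / 2 <= Cmod (f z) * a) by nra.
  apply Rle_trans with ((e * a * a / 2) * / (a * a / 2)); [|right; field; lra].
  apply Rmult_le_compat; [apply Cmod_ge_0|apply Rlt_le, Rinv_0_lt_compat; nra|auto|].
  apply Rinv_le_contravar; nra.
Qed.

Lemma ex_derive_caratheodory (F H : C -> C) (w : C) (r : R) : 0 < r ->
  (forall z, Cmod (z - w) < r -> F z = (F w + (z - w) * H z)%C) ->
  Ccontinuous_within (fun _ => True) H w ->
  @ex_derive C_AbsRing C_NormedModule F w.
Proof.
  intros Hr HF HH. exists (H w). split; [apply is_linear_scal_l|].
  intros x Hx.
  pose proof (@is_filter_lim_locally_unique C_AbsRing (AbsRing_NormedModule C_AbsRing) w x Hx).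
  subst x. intros eps. destruct (HH eps (cond_pos eps)) as [dl [Hdl Hd]].
  set (k := @norm_factor C_AbsRing (AbsRing_NormedModule C_AbsRing)).
  assert (Hk : 0 < k) by apply norm_factor_gt_0.
  assert (Hm : 0 < Rmin r dl / k) by (apply Rdiv_lt_0_compat; [apply Rmin_pos|]; auto).
  exists (mkposreal _ Hm). intros y Hy.
  apply (@norm_compat2 C_AbsRing (AbsRing_NormedModule C_AbsRing)) in Hy. simpl in Hy.
  change (Cmod (F y - F w - (y - w) * H w) <= eps * Cmod (y - w)).
  assert (Hyw : Cmod (y - w) < Rmin r dl).
  { change (Cmod (y - w) < k * (Rmin r dl / k)) in Hy.
    replace (k * (Rmin r dl / k)) with (Rmin r dl) in Hy by (field; lra). auto. }
  rewrite HF by (eapply Rlt_le_trans; [exact Hyw|apply Rmin_l]).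
  replace (F w + (y - w) * H y - F w - (y - w) * H w)%C with ((y - w) * (H y - H w))%C by ring.
  rewrite Cmod_mult, Rmult_comm. apply Rmult_le_compat_r; [apply Cmod_ge_0|].
  apply Hd; [exact I|]. eapply Rlt_le_trans; [exact Hyw|apply Rmin_r].
Qed.

(* [C_NormedModule] and [AbsRing_NormedModule C_AbsRing] share the norm [Cmod], so only the
   linearity of the differential needs to be re-established. *)
Lemma ex_derive_C_AbsRing (F : C -> C) (w : C) :
  @ex_derive C_AbsRing C_NormedModule F w -> @ex_derive C_AbsRing (AbsRing_NormedModule C_AbsRing) F w.
Proof.
  intros [l [_ Hd]]. exists l. split; [apply is_linear_scal_l|]. intros x Hx. exact (Hd x Hx).
Qed.

Lemma ex_derive_Cinv (w : C) : w <> RtoC 0 -> @ex_derive C_AbsRing C_NormedModule Cinv w.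
Proof.
  intros Hw. apply (ex_derive_caratheodory _ (fun z => - / (z * w))%C w (Cmod w)).
  - apply Cmod_gt_0; auto.
  - intros z Hz. assert (z <> RtoC 0).
    { intros E. rewrite E in Hz. replace (0 - w)%C with (- w)%C in Hz by ring. rewrite Cmod_opp in Hz. lra. }
    field. auto.
  - replace (fun z => - / (z * w))%C with (fun z => (- (1)) * / (z * w))%C
      by (apply functional_extensionality; intros; ring).
    apply Ccontinuous_within_mult; [apply Ccontinuous_within_const|].
    apply Ccontinuous_within_inv; [apply Cmult_neq_0; auto|].
    apply Ccontinuous_within_mult; [|apply Ccontinuous_within_const].
    intros e He. exists e. split; auto. intros. lra.
Qed.

(** * Power series with bounded coefficients on the unit disk *)

Definition bounded_coefs (c : nat -> C) (B : R) := forall k, Cmod (c k) <= B.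

Definition pseries_partial (c : nat -> C) (z : C) (K : nat) : C :=
  csum (fun k => (c k * Cpow z k)%C) K.
Definition pseries (c : nat -> C) (z : C) : C := Cseq_lim (pseries_partial c z).

Lemma bounded_coefs_nonneg c B : bounded_coefs c B -> 0 <= B.
Proof. intros Hc. pose proof (Hc O). pose proof (Cmod_ge_0 (c O)). lra. Qed.

Lemma pseries_partial_tail c B z n t : bounded_coefs c B -> Cmod z < 1 ->
  Cmod (pseries_partial c z (n + t) - pseries_partial c z n) <= B * Cmod z ^ n / (1 - Cmod z).
Proof.
  intros Hc Hz. pose proof (bounded_coefs_nonneg c B Hc). pose proof (Cmod_ge_0 z).
  unfold pseries_partial. rewrite csum_split.
  match goal with |- context [(?a + ?b - ?a)%C] => replace (a + b - a)%C with b by ring end.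
  eapply Rle_trans; [apply Cmod_csum_le|].
  apply Rle_trans with (rsum (fun k => B * Cmod z ^ n * Cmod z ^ k) t).
  { apply rsum_le. intros k _. rewrite Cmod_mult, Cmod_pow, pow_add.
    pose proof (Hc (n + k)%nat). pose proof (pow_le (Cmod z) n H0). pose proof (pow_le (Cmod z) k H0).
    rewrite <- Rmult_assoc. apply Rmult_le_compat_r; auto. apply Rmult_le_compat_r; auto. }
  rewrite rsum_scal. unfold Rdiv. apply Rmult_le_compat_l.
  - pose proof (pow_le (Cmod z) n H0). nra.
  - apply rsum_geom_le. lra.
Qed.

Lemma pseries_cv c B z : bounded_coefs c B -> Cmod z < 1 ->
  Cseq_cv (pseries_partial c z) (pseries c z).
Proof.
  intros Hc Hz. pose proof (bounded_coefs_nonneg c B Hc). pose proof (Cmod_ge_0 z).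
  apply (Cseq_cauchy_lim _ (fun n => B * Cmod z ^ n / (1 - Cmod z))).
  - intros n m Hnm. replace m with (n + (m - n))%nat by lia. apply pseries_partial_tail; auto.
  - intros e He.
    destruct (pow_cv_0 (Cmod z) ltac:(lra) (e * (1 - Cmod z) / (B + 1))) as [N HN].
    { apply Rdiv_lt_0_compat; [apply Rmult_lt_0_compat|]; lra. }
    exists N. intros n Hn. specialize (HN n Hn). pose proof (pow_le (Cmod z) n H0).
    apply Rle_trans with ((B + 1) * (e * (1 - Cmod z) / (B + 1)) / (1 - Cmod z)).
    + unfold Rdiv. apply Rmult_le_compat_r; [apply Rlt_le, Rinv_0_lt_compat; lra|]. nra.
    + right. field. lra.
Qed.

Lemma pseries_tail c B z n : bounded_coefs c B -> Cmod z < 1 ->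
  Cmod (pseries c z - pseries_partial c z n) <= B * Cmod z ^ n / (1 - Cmod z).
Proof.
  intros Hc Hz. apply Cseq_cv_dist_le with (pseries_partial c z); [eapply pseries_cv; eauto|].
  exists n. intros m Hm. replace m with (n + (m - n))%nat by lia. apply pseries_partial_tail; auto.
Qed.

Lemma Cmod_pseries_le c B z : bounded_coefs c B -> Cmod z < 1 ->
  Cmod (pseries c z) <= B / (1 - Cmod z).
Proof.
  intros Hc Hz. pose proof (pseries_tail c B z O Hc Hz) as H.
  unfold pseries_partial in H. simpl in H.
  replace (pseries c z - 0)%C with (pseries c z) in H by ring. rewrite Rmult_1_r in H. auto.
Qed.

(* [quotient_coefs p c] are the coefficients of [(f z - f p) / (z - p)] for [f = pseries c]. *)
Definition quotient_coefs (p : C) (c : nat -> C) (j : nat) : C :=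
  pseries (fun m => c (j + 1 + m)%nat) p.
Definition quotient_coefs_trunc (p : C) (c : nat -> C) (K j : nat) : C :=
  pseries_partial (fun m => c (j + 1 + m)%nat) p (K - 1 - j).

Lemma quotient_coefs_bounded p c B : bounded_coefs c B -> Cmod p < 1 ->
  bounded_coefs (quotient_coefs p c) (B / (1 - Cmod p)).
Proof. intros Hc Hp j. apply Cmod_pseries_le; auto. intros k. apply Hc. Qed.

Lemma Cpow_minus_factor (z p : C) K :
  ((z - p) * csum (fun j => Cpow p (K - 1 - j) * Cpow z j) K = Cpow z K - Cpow p K)%C.
Proof.
  induction K as [|K IHK]; [simpl; ring|].
  assert (E : csum (fun j => Cpow p (S K - 1 - j) * Cpow z j)%C K
              = (p * csum (fun j => Cpow p (K - 1 - j) * Cpow z j) K)%C).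
  { rewrite <- csum_scal. apply csum_ext. intros j Hj.
    replace (S K - 1 - j)%nat with (S (K - 1 - j)) by lia. simpl. ring. }
  change (csum (fun j => Cpow p (S K - 1 - j) * Cpow z j)%C (S K)) with
    (csum (fun j => Cpow p (S K - 1 - j) * Cpow z j)%C K + Cpow p (S K - 1 - K) * Cpow z K)%C.
  rewrite E. replace (S K - 1 - K)%nat with O by lia. simpl Cpow.
  replace ((z - p) * (p * csum (fun j => Cpow p (K - 1 - j) * Cpow z j) K + 1 * Cpow z K))%C
    with (p * ((z - p) * csum (fun j => Cpow p (K - 1 - j) * Cpow z j) K) + (z - p) * Cpow z K)%C by ring.
  rewrite IHK. ring.
Qed.

Lemma pseries_partial_minus_factor c (z p : C) K :
  (pseries_partial c z K - pseries_partial c p K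
   = (z - p) * csum (fun j => quotient_coefs_trunc p c K j * Cpow z j) K)%C.
Proof.
  induction K as [|K IHK]; [unfold pseries_partial; simpl; ring|].
  assert (E : forall j, (j < K)%nat -> quotient_coefs_trunc p c (S K) j
                = (quotient_coefs_trunc p c K j + c K * Cpow p (K - 1 - j))%C).
  { intros j Hj. unfold quotient_coefs_trunc, pseries_partial.
    replace (S K - 1 - j)%nat with (S (K - 1 - j)) by lia. simpl csum.
    replace (j + 1 + (K - 1 - j))%nat with K by lia. reflexivity. }
  assert (EK : quotient_coefs_trunc p c (S K) K = RtoC 0).
  { unfold quotient_coefs_trunc. replace (S K - 1 - K)%nat with O by lia. reflexivity. }
  simpl csum. rewrite EK.
  rewrite (csum_ext _ (fun j => quotient_coefs_trunc p c K j * Cpow z j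
                                + c K * (Cpow p (K - 1 - j) * Cpow z j))%C)
    by (intros j Hj; rewrite E by auto; ring).
  rewrite csum_plus, csum_scal.
  unfold pseries_partial in *. simpl csum.
  replace (csum (fun k => c k * Cpow z k) K + c K * Cpow z K - (csum (fun k => c k * Cpow p k) K + c K * Cpow p K))%C
    with ((csum (fun k => c k * Cpow z k) K - csum (fun k => c k * Cpow p k) K) + c K * (Cpow z K - Cpow p K))%C
    by ring.
  rewrite IHK, <- Cpow_minus_factor. ring.
Qed.

Lemma pow_mult_le_Rmax_pow (x y : R) a b : 0 <= x -> 0 <= y -> x ^ a * y ^ b <= Rmax x y ^ (a + b).
Proof.
  intros Hx Hy. rewrite pow_add. apply Rmult_le_compat; try (apply pow_le; auto);
  apply pow_incr; split; auto; [apply Rmax_l|apply Rmax_r].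
Qed.

Lemma quotient_trunc_close c B z p K : bounded_coefs c B -> Cmod z < 1 -> Cmod p < 1 ->
  Cmod (pseries_partial (quotient_coefs p c) z K - csum (fun j => quotient_coefs_trunc p c K j * Cpow z j)%C K)
  <= B / (1 - Cmod p) * (INR K * Rmax (Cmod z) (Cmod p) ^ (K - 1)).
Proof.
  intros Hc Hz Hp. pose proof (bounded_coefs_nonneg c B Hc).
  set (rho := Rmax (Cmod z) (Cmod p)).
  unfold pseries_partial. rewrite <- csum_minus. eapply Rle_trans; [apply Cmod_csum_le|].
  replace (B / (1 - Cmod p) * (INR K * rho ^ (K - 1)))
    with (rsum (fun _ => B / (1 - Cmod p) * rho ^ (K - 1)) K) by (rewrite rsum_const; ring).
  apply rsum_le. intros j Hj.
  replace (quotient_coefs p c j * Cpow z j - quotient_coefs_trunc p c K j * Cpow z j)%C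
    with ((quotient_coefs p c j - quotient_coefs_trunc p c K j) * Cpow z j)%C by ring.
  rewrite Cmod_mult, Cmod_pow. unfold quotient_coefs, quotient_coefs_trunc.
  pose proof (pseries_tail (fun m => c (j + 1 + m)%nat) B p (K - 1 - j) ltac:(intro; apply Hc) Hp).
  pose proof (pow_mult_le_Rmax_pow (Cmod p) (Cmod z) (K - 1 - j) j (Cmod_ge_0 _) (Cmod_ge_0 _)) as Hmax.
  replace (K - 1 - j + j)%nat with (K - 1)%nat in Hmax by lia. rewrite Rmax_comm in Hmax. fold rho in Hmax.
  pose proof (pow_le (Cmod z) j (Cmod_ge_0 _)).
  apply Rle_trans with (B * Cmod p ^ (K - 1 - j) / (1 - Cmod p) * Cmod z ^ j).
  - apply Rmult_le_compat_r; auto.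
  - replace (B * Cmod p ^ (K - 1 - j) / (1 - Cmod p) * Cmod z ^ j)
      with (B / (1 - Cmod p) * (Cmod p ^ (K - 1 - j) * Cmod z ^ j)) by (field; lra).
    apply Rmult_le_compat_l; auto. apply Rdiv_le_0_compat; lra.
Qed.

(* Pass to the limit in the exact factorization [pseries_partial_minus_factor] of the partial sums. *)
Lemma pseries_factor c B z p : bounded_coefs c B -> Cmod z < 1 -> Cmod p < 1 ->
  pseries c z = (pseries c p + (z - p) * pseries (quotient_coefs p c) z)%C.
Proof.
  intros Hc Hz Hp. pose proof (bounded_coefs_nonneg c B Hc).
  set (rho := Rmax (Cmod z) (Cmod p)).
  assert (Hrho : 0 <= rho < 1).
  { split; [apply Rle_trans with (Cmod z); [apply Cmod_ge_0|apply Rmax_l]|apply Rmax_lub_lt; auto]. }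
  set (M := B / (1 - Cmod p)). assert (HM : 0 <= M) by (apply Rdiv_le_0_compat; lra).
  assert (Htrunc : Cseq_cv (fun K => csum (fun j => quotient_coefs_trunc p c K j * Cpow z j)%C K)
                           (pseries (quotient_coefs p c) z)).
  { intros e He.
    destruct (pseries_cv (quotient_coefs p c) M z (quotient_coefs_bounded p c B Hc Hp) Hz (e / 2))
      as [N1 HN1]; [lra|].
    destruct (INR_mult_pow_cv_0 rho Hrho (e / 4 / (M + 1))) as [N2 HN2]; [apply Rdiv_lt_0_compat; lra|].
    destruct (pow_cv_0 rho Hrho (e / 4 / (M + 1))) as [N3 HN3]; [apply Rdiv_lt_0_compat; lra|].
    exists (S (N1 + N2 + N3)). intros K HK.
    specialize (HN1 K ltac:(lia)). specialize (HN2 (K - 1)%nat ltac:(lia)). specialize (HN3 (K - 1)%nat ltac:(lia)).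
    pose proof (quotient_trunc_close c B z p K Hc Hz Hp) as Hclose. fold rho M in Hclose.
    assert (INR K * rho ^ (K - 1) <= e / 2 / (M + 1)).
    { replace (INR K) with (INR (K - 1) + 1) by (rewrite <- S_INR; f_equal; lia).
      replace (e / 2 / (M + 1)) with (e / 4 / (M + 1) + e / 4 / (M + 1)) by (field; lra). lra. }
    assert (M * (INR K * rho ^ (K - 1)) <= e / 2).
    { apply Rle_trans with ((M + 1) * (e / 2 / (M + 1))); [|right; field; lra].
      apply Rmult_le_compat; try lra. apply Rmult_le_pos; [apply pos_INR|apply pow_le; lra]. }
    pose proof (Cmod_triangle_minus (csum (fun j => quotient_coefs_trunc p c K j * Cpow z j)%C K)
                  (pseries_partial (quotient_coefs p c) z K) (pseries (quotient_coefs p c) z)).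
    rewrite Cmod_minus_sym in Hclose. lra. }
  assert (Hl : Cseq_cv (fun K => pseries_partial c z K - pseries_partial c p K)%C (pseries c z - pseries c p)%C)
    by (apply Cseq_cv_minus; eapply pseries_cv; eauto).
  assert (Hr : Cseq_cv (fun K => pseries_partial c z K - pseries_partial c p K)%C
                       ((z - p) * pseries (quotient_coefs p c) z)%C).
  { apply Cseq_cv_ext with (fun K => (z - p) * csum (fun j => quotient_coefs_trunc p c K j * Cpow z j) K)%C.
    - intros K. rewrite pseries_partial_minus_factor. auto.
    - apply Cseq_cv_scal. auto. }
  rewrite <- (Cseq_cv_unique _ _ _ Hl Hr). ring.
Qed.

Lemma disk_margin p z : Cmod p < 1 -> Cmod (z - p) < (1 - Cmod p) / 2 ->
  Cmod z < 1 /\ (1 - Cmod p) / 2 < 1 - Cmod z.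
Proof.
  intros Hp H. pose proof (Cmod_triangle (z - p) p). replace (z - p + p)%C with z in H0 by ring. lra.
Qed.

Lemma pseries_continuous c B p : bounded_coefs c B -> Cmod p < 1 ->
  Ccontinuous_within (fun _ => True) (pseries c) p.
Proof.
  intros Hc Hp e He. pose proof (bounded_coefs_nonneg c B Hc).
  set (M := B / (1 - Cmod p) * 2 / (1 - Cmod p)).
  assert (HM : 0 <= M).
  { unfold M. apply Rdiv_le_0_compat; [|lra]. apply Rmult_le_pos; [apply Rdiv_le_0_compat|]; lra. }
  exists (Rmin ((1 - Cmod p) / 2) (e / (M + 1))). split; [apply Rmin_pos; [lra|apply Rdiv_lt_0_compat; lra]|].
  intros z _ Hz. assert (Hz1 : Cmod (z - p) < (1 - Cmod p) / 2) by (eapply Rlt_le_trans; [exact Hz|apply Rmin_l]).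
  destruct (disk_margin p z Hp Hz1) as [Hz2 Hz3].
  rewrite (pseries_factor c B z p Hc Hz2 Hp).
  replace (pseries c p + (z - p) * pseries (quotient_coefs p c) z - pseries c p)%C
    with ((z - p) * pseries (quotient_coefs p c) z)%C by ring.
  rewrite Cmod_mult.
  assert (HQ : Cmod (pseries (quotient_coefs p c) z) <= M).
  { eapply Rle_trans; [apply (Cmod_pseries_le _ _ z (quotient_coefs_bounded p c B Hc Hp) Hz2)|].
    assert (Hinv : / (1 - Cmod z) <= 2 / (1 - Cmod p)).
    { replace (2 / (1 - Cmod p)) with (/ ((1 - Cmod p) / 2)) by (field; lra).
      apply Rinv_le_contravar; lra. }
    unfold M. replace (B / (1 - Cmod p) * 2 / (1 - Cmod p)) with (B / (1 - Cmod p) * (2 / (1 - Cmod p)))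
      by (field; lra).
    apply Rmult_le_compat_l; [apply Rdiv_le_0_compat; lra|exact Hinv]. }
  assert (Cmod (z - p) <= e / (M + 1)) by (left; eapply Rlt_le_trans; [exact Hz|apply Rmin_r]).
  apply Rle_trans with (e / (M + 1) * (M + 1)); [|right; field; lra].
  pose proof (Cmod_ge_0 (z - p)). pose proof (Cmod_ge_0 (pseries (quotient_coefs p c) z)).
  apply Rmult_le_compat; auto; lra.
Qed.

(** * Zeros of a power series and meromorphy of its reciprocal *)

Section IteratedQuotients.

Variables (c : nat -> C) (B : R) (p : C).
Hypothesis Hc : bounded_coefs c B.
Hypothesis Hp : Cmod p < 1.

Fixpoint iter_quotient_coefs (m : nat) : nat -> C :=
  match m with O => c | S m => quotient_coefs p (iter_quotient_coefs m) end.
Fixpoint iter_quotient_bound (m : nat) : R :=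
  match m with O => B | S m => iter_quotient_bound m / (1 - Cmod p) end.

Lemma iter_quotient_coefs_bounded m : bounded_coefs (iter_quotient_coefs m) (iter_quotient_bound m).
Proof. induction m; simpl; auto. apply quotient_coefs_bounded; auto. Qed.

Lemma iter_quotient_bound_eq m : iter_quotient_bound m * (1 - Cmod p) ^ m = B.
Proof. induction m; simpl; [ring|]. rewrite <- IHm. field. lra. Qed.

(* [iter_quotient m p] is the [m]-th Taylor coefficient of [pseries c] at [p]. *)
Definition iter_quotient (m : nat) (z : C) : C := pseries (iter_quotient_coefs m) z.

Lemma iter_quotient_factor m z : Cmod z < 1 ->
  iter_quotient m z = (iter_quotient m p + (z - p) * iter_quotient (S m) z)%C.
Proof. intros Hz. apply (pseries_factor _ (iter_quotient_bound m)); auto. apply iter_quotient_coefs_bounded. Qed.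

Lemma pseries_factor_pow m : (forall j, (j < m)%nat -> iter_quotient j p = RtoC 0) ->
  forall z, Cmod z < 1 -> pseries c z = (Cpow (z - p) m * iter_quotient m z)%C.
Proof.
  induction m as [|m IH]; intros H z Hz; [unfold iter_quotient; simpl; ring|].
  rewrite IH, iter_quotient_factor, H by auto. simpl. ring.
Qed.

(* If every Taylor coefficient at [p] vanishes, [|f z| <= t^N B / (1 - |z|)] for all [N], where
   [t = |z - p| / (1 - |p|) < 1]. *)
Lemma pseries_vanish_near : (forall m, iter_quotient m p = RtoC 0) ->
  forall z, Cmod (z - p) < 1 - Cmod p -> pseries c z = RtoC 0.
Proof.
  intros H z Hz.
  assert (Hz1 : Cmod z < 1).
  { pose proof (Cmod_triangle (z - p) p). replace (z - p + p)%C with z in H0 by ring. lra. }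
  set (t := Cmod (z - p) / (1 - Cmod p)).
  assert (Ht : 0 <= t < 1).
  { split; [apply Rdiv_le_0_compat; [apply Cmod_ge_0|lra]|].
    apply Rmult_lt_reg_r with (1 - Cmod p); [lra|]. unfold t, Rdiv. rewrite Rmult_assoc, Rinv_l by lra. lra. }
  pose proof (bounded_coefs_nonneg c B Hc) as HB.
  apply Cmod_eq_0. apply Rle_antisym; [|apply Cmod_ge_0]. apply Rnot_lt_le. intro Hl.
  set (X := Cmod (pseries c z)) in *.
  destruct (pow_cv_0 t Ht (X * (1 - Cmod z) / (B + 1))) as [N HN].
  { apply Rdiv_lt_0_compat; [apply Rmult_lt_0_compat|]; lra. }
  specialize (HN N (le_n _)).
  assert (HtN : Cmod (z - p) ^ N * iter_quotient_bound N = t ^ N * B).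
  { rewrite <- (iter_quotient_bound_eq N). unfold t, Rdiv. rewrite Rpow_mult_distr, pow_inv.
    field. apply pow_nonzero. lra. }
  assert (Hb : X <= t ^ N * B / (1 - Cmod z)).
  { unfold X. rewrite (pseries_factor_pow N) by auto. rewrite Cmod_mult, Cmod_pow, <- HtN.
    unfold Rdiv. rewrite Rmult_assoc. apply Rmult_le_compat_l; [apply pow_le, Cmod_ge_0|].
    apply (Cmod_pseries_le _ _ z (iter_quotient_coefs_bounded N) Hz1). }
  assert (t ^ N * B / (1 - Cmod z) <= X * (B / (B + 1))).
  { apply Rle_trans with (X * (1 - Cmod z) / (B + 1) * B / (1 - Cmod z)); [|right; field; lra].
    unfold Rdiv. apply Rmult_le_compat_r; [apply Rlt_le, Rinv_0_lt_compat; lra|].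
    apply Rmult_le_compat_r; auto. }
  assert (B / (B + 1) < 1).
  { apply Rmult_lt_reg_r with (B + 1); [lra|]. unfold Rdiv. rewrite Rmult_assoc, Rinv_l by lra. lra. }
  assert (0 <= B / (B + 1)) by (apply Rdiv_le_0_compat; lra).
  nra.
Qed.

Lemma pseries_zero_finite_order : (exists m, iter_quotient m p <> RtoC 0) ->
  exists m g, (forall z, Cmod z < 1 -> pseries c z = (Cpow (z - p) m * g z)%C) /\
    g p <> RtoC 0 /\ Ccontinuous_within (fun _ => True) g p.
Proof.
  intros H.
  destruct (Wf_nat.dec_inh_nat_subset_has_unique_least_element
              (fun m => iter_quotient m p <> RtoC 0) (fun m => classic _) H) as [m [[Hm Hmin] _]].
  exists m, (iter_quotient m). split; [|split]; auto.
  - apply pseries_factor_pow. intros j Hj. apply NNPP. intros Hj0. specialize (Hmin j Hj0). lia.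
  - apply (pseries_continuous _ (iter_quotient_bound m)); auto. apply iter_quotient_coefs_bounded.
Qed.

End IteratedQuotients.

Lemma polar_unit (p : C) : exists zeta, Cmod zeta = 1 /\ p = (RtoC (Cmod p) * zeta)%C.
Proof.
  destruct (Ceq_dec p (RtoC 0)) as [H|H].
  - exists (RtoC 1). split; [apply Cmod_1|]. rewrite H, Cmod_0. ring.
  - assert (Hm : 0 < Cmod p) by (apply Cmod_gt_0; auto).
    assert (RtoC (Cmod p) <> RtoC 0) by (intro H0; apply RtoC_inj in H0; lra).
    exists (p * / RtoC (Cmod p))%C. split.
    + rewrite Cmod_mult, Cmod_inv by auto. rewrite Cmod_R, Rabs_right by lra. field. lra.
    + field. auto.
Qed.

Section ReciprocalOfPseries.

Variables (c : nat -> C) (B : R) (A : C -> C).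
Hypothesis Hc : bounded_coefs c B.
Hypothesis HA_series : forall z, Cmod z < 1 -> Cseq_cv (pseries_partial c z) (A z).
Hypothesis HA_cont : forall zeta, Cmod zeta = 1 -> Ccontinuous_within (fun w => Cmod w <= 1) A zeta.
Hypothesis HA_circle : forall zeta, Cmod zeta = 1 -> A zeta <> RtoC 0.

Lemma A_eq_pseries z : Cmod z < 1 -> A z = pseries c z.
Proof. intros Hz. apply (Cseq_cv_unique (pseries_partial c z)); auto. eapply pseries_cv; eauto. Qed.

(* Otherwise [A] would vanish on the disk of radius [1 - |p|] about [p], which touches the circle
   at [p / |p|], where [A] is continuous and nonzero. *)
Lemma taylor_coefs_not_all_zero p : Cmod p < 1 -> exists m, iter_quotient c p m p <> RtoC 0.
Proof.
  intros Hp. apply NNPP. intro Hno.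
  assert (Hz : forall m, iter_quotient c p m p = RtoC 0) by (intros m; apply NNPP; eauto).
  pose proof (pseries_vanish_near c B p Hc Hp Hz) as Hvan.
  destruct (polar_unit p) as [zeta [Hz1 Hz2]].
  pose proof (HA_circle zeta Hz1) as Hnz. apply Cmod_gt_0 in Hnz.
  destruct (HA_cont zeta Hz1 (Cmod (A zeta) / 2) ltac:(lra)) as [dl [Hdl Hd]].
  set (s := Rmax (Cmod p) (1 - dl / 2)).
  assert (Hs : Cmod p <= s < 1) by (split; [apply Rmax_l|apply Rmax_lub_lt; lra]).
  assert (Hs2 : 1 - dl / 2 <= s) by apply Rmax_r.
  pose proof (Cmod_ge_0 p).
  set (w := (RtoC s * zeta)%C).
  assert (Hw : Cmod w = s) by (unfold w; rewrite Cmod_mult, Hz1, Cmod_R, Rabs_right; lra).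
  assert (Hwp : Cmod (w - p) = s - Cmod p).
  { replace (w - p)%C with (RtoC (s - Cmod p) * zeta)%C
      by (unfold w; rewrite RtoC_minus; set (r := Cmod p) in *; rewrite Hz2 at 1; ring).
    rewrite Cmod_mult, Hz1, Cmod_R, Rabs_right; lra. }
  assert (Hwz : Cmod (w - zeta) = 1 - s).
  { replace (w - zeta)%C with (RtoC (- (1 - s)) * zeta)%C
      by (unfold w; rewrite RtoC_opp, RtoC_minus; ring).
    rewrite Cmod_mult, Hz1, Cmod_R, Rabs_left1; lra. }
  assert (HAw : A w = RtoC 0) by (rewrite A_eq_pseries by lra; apply Hvan; lra).
  specialize (Hd w ltac:(lra) ltac:(lra)). rewrite HAw, Cmod_minus_sym in Hd.
  replace (A zeta - 0)%C with (A zeta) in Hd by ring. lra.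
Qed.

Lemma A_local_factorization p : Cmod p < 1 -> exists m g dl, 0 < dl /\ g p <> RtoC 0 /\
  forall z, Cmod (z - p) < dl ->
    Cmod z < 1 /\ A z = (Cpow (z - p) m * g z)%C /\ Cmod (g p) / 2 <= Cmod (g z).
Proof.
  intros Hp.
  destruct (pseries_zero_finite_order c B p Hc Hp (taylor_coefs_not_all_zero p Hp)) as [m [g [H1 [H2 H3]]]].
  exists m, g. assert (Hg : 0 < Cmod (g p)) by (apply Cmod_gt_0; auto).
  destruct (H3 (Cmod (g p) / 2) ltac:(lra)) as [dl [Hdl Hd]].
  exists (Rmin dl ((1 - Cmod p) / 2)). split; [apply Rmin_pos; lra|]. split; auto.
  intros z Hz. assert (Hz1 : Cmod (z - p) < (1 - Cmod p) / 2) by (eapply Rlt_le_trans; [exact Hz|apply Rmin_r]).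
  destruct (disk_margin p z Hp Hz1) as [Hz2 _].
  split; [auto|split; [rewrite A_eq_pseries; auto|]].
  specialize (Hd z I ltac:(eapply Rlt_le_trans; [exact Hz|apply Rmin_l])).
  pose proof (Cmod_reverse_triangle (g p) (g z)). rewrite Cmod_minus_sym in H. lra.
Qed.

Lemma A_ex_derive w : Cmod w < 1 -> @ex_derive C_AbsRing C_NormedModule A w.
Proof.
  intros Hw. apply (ex_derive_caratheodory _ (pseries (quotient_coefs w c)) w ((1 - Cmod w) / 2)); [lra| |].
  - intros z Hz. destruct (disk_margin w z Hw Hz) as [Hz1 _].
    rewrite !A_eq_pseries by auto. apply (pseries_factor c B); auto.
  - apply (pseries_continuous _ (B / (1 - Cmod w))); auto. apply quotient_coefs_bounded; auto.
Qed.

Lemma A_zeros_isolated w : Cmod w < 1 -> exists d, 0 < d /\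
  forall p, Cmod p < 1 /\ A p = RtoC 0 -> p <> w -> d <= Cmod (p - w).
Proof.
  intros Hw. destruct (A_local_factorization w Hw) as [m [g [dl [Hdl [Hg Hloc]]]]].
  exists dl. split; auto. intros p [Hp HAp] Hpw. apply Rnot_lt_le. intro Hlt.
  destruct (Hloc p Hlt) as [_ [E Hgp]]. rewrite E in HAp.
  destruct (Cmult_integral _ _ HAp) as [H|H].
  - apply (Cpow_nz (p - w) m); auto. intro H0. apply Hpw.
    replace p with ((p - w) + w)%C by ring. rewrite H0. ring.
  - rewrite H, Cmod_0 in Hgp. apply Cmod_gt_0 in Hg. lra.
Qed.

Lemma Cinv_A_pole_order p : Cmod p < 1 -> A p = RtoC 0 -> exists (m : nat) (d M : R), 0 < d /\
  forall w, 0 < Cmod (w - p) < d -> Cmod (Cpow (w - p) m * / A w)%C <= M.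
Proof.
  intros Hp HAp. destruct (A_local_factorization p Hp) as [m [g [dl [Hdl [Hg Hloc]]]]].
  assert (Hg0 : 0 < Cmod (g p)) by (apply Cmod_gt_0; auto).
  exists m, dl, (2 / Cmod (g p)). split; auto. intros w [Hw1 Hw2].
  destruct (Hloc w Hw2) as [_ [E Hgw]].
  assert (Hwp : (w - p)%C <> RtoC 0) by (apply Cmod_gt_0; lra).
  assert (Hgw0 : g w <> RtoC 0) by (apply Cmod_gt_0; lra).
  rewrite E. replace (Cpow (w - p) m * / (Cpow (w - p) m * g w))%C with (/ g w)%C
    by (field; split; auto; apply Cpow_nz; auto).
  rewrite Cmod_inv by auto. apply Rle_trans with (/ (Cmod (g p) / 2)).
  - apply Rinv_le_contravar; lra.
  - right. field. lra.
Qed.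

Theorem meromorphic_extension_Cinv : meromorphic_extension (fun z => Cmod z < 1) (fun z => / A z)%C.
Proof.
  exists (fun z => / A z)%C, (fun z => Cmod z < 1 /\ A z = RtoC 0).
  split; [split; [|split; [|split]]|].
  - intros p [Hp _]; auto.
  - apply A_zeros_isolated.
  - intros w Hw Hnp. apply (ex_derive_comp Cinv A w); [|apply ex_derive_C_AbsRing, A_ex_derive; auto].
    apply ex_derive_Cinv. intro H. apply Hnp. auto.
  - intros p [Hp HAp]. apply Cinv_A_pole_order; auto.
  - intros zeta Hz e He.
    destruct (Ccontinuous_within_inv _ A zeta (HA_circle zeta Hz) (HA_cont zeta Hz) e He) as [dl [Hdl Hd]].
    exists dl. split; auto. intros w Hw _ Hwz. apply Hd; auto. lra.
Qed.

End ReciprocalOfPseries.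

(** * Polynomials as coefficient sequences, with the l1 norm *)

Definition poly := nat -> C.
Definition pconst (c : C) : poly := fun k => match k with O => c | _ => RtoC 0 end.
Definition padd (p q : poly) : poly := fun k => (p k + q k)%C.
Definition psub (p q : poly) : poly := fun k => (p k - q k)%C.
Definition pscal (a : C) (p : poly) : poly := fun k => (a * p k)%C.
Definition pmulX2 (p : poly) : poly :=
  fun k => match k with O | S O => RtoC 0 | S (S k) => p k end.
Definition pmul_affine (a b : C) (p : poly) : poly := padd (pscal a p) (pscal b (pmulX2 p)).

(* Dominating [|p z|] on the closed unit disk, this norm controls uniform convergence there
   as well as each coefficient. *)
Definition pnorm (d : nat) (p : poly) : R := rsum (fun k => Cmod (p k)) d.

Lemma pnorm_nonneg d p : 0 <= pnorm d p.
Proof. apply rsum_nonneg. intros; apply Cmod_ge_0. Qed.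

Lemma pnorm_add d p q : pnorm d (padd p q) <= pnorm d p + pnorm d q.
Proof. unfold pnorm. rewrite <- rsum_plus. apply rsum_le. intros; apply Cmod_triangle. Qed.

Lemma pnorm_scal d a p : pnorm d (pscal a p) <= Cmod a * pnorm d p.
Proof. unfold pnorm, pscal. rewrite <- rsum_scal. apply rsum_le. intros; rewrite Cmod_mult; lra. Qed.

Lemma pnorm_le_succ d p : pnorm d p <= pnorm (S d) p.
Proof. unfold pnorm. simpl. pose proof (Cmod_ge_0 (p d)). lra. Qed.

Lemma pnorm_mulX2 d p : pnorm d (pmulX2 p) <= pnorm d p.
Proof.
  assert (Heq : forall d, pnorm (S (S d)) (pmulX2 p) = pnorm d p).
  { unfold pnorm. induction d0 as [|d0 IH]; [simpl; rewrite Cmod_0; ring|].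
    change (rsum (fun k => Cmod (pmulX2 p k)) (S (S (S d0))))
      with (rsum (fun k => Cmod (pmulX2 p k)) (S (S d0)) + Cmod (p d0)).
    rewrite IH. reflexivity. }
  destruct d as [|[|d]].
  - unfold pnorm; simpl; lra.
  - unfold pnorm; simpl. rewrite Cmod_0. pose proof (Cmod_ge_0 (p O)). lra.
  - rewrite Heq. pose proof (pnorm_le_succ d p). pose proof (pnorm_le_succ (S d) p). lra.
Qed.

Lemma pnorm_mul_affine d a b p : pnorm d (pmul_affine a b p) <= (Cmod a + Cmod b) * pnorm d p.
Proof.
  unfold pmul_affine. eapply Rle_trans; [apply pnorm_add|].
  pose proof (pnorm_scal d a p). pose proof (pnorm_scal d b (pmulX2 p)).
  pose proof (pnorm_mulX2 d p). pose proof (Cmod_ge_0 b). nra.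
Qed.

Lemma Cmod_coef_le_pnorm d p k : (k < d)%nat -> Cmod (p k) <= pnorm d p.
Proof.
  intros H. induction H.
  - unfold pnorm. simpl. pose proof (pnorm_nonneg k p). unfold pnorm in H. lra.
  - pose proof (pnorm_le_succ m p). lra.
Qed.

Lemma pnorm_pconst d c : pnorm d (pconst c) <= Cmod c.
Proof.
  unfold pnorm. induction d as [|d IH]; simpl; [apply Cmod_ge_0|].
  destruct d; simpl in *; [lra|]. rewrite Cmod_0. lra.
Qed.

Definition poly2 := (poly * poly)%type.
Definition padd2 (x y : poly2) : poly2 := (padd (fst x) (fst y), padd (snd x) (snd y)).
Definition pnorm2 d (x : poly2) := pnorm d (fst x) + pnorm d (snd x).
Definition e2 : poly2 := (pconst 0, pconst 1).

Lemma pnorm2_nonneg d x : 0 <= pnorm2 d x.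
Proof. unfold pnorm2. pose proof (pnorm_nonneg d (fst x)). pose proof (pnorm_nonneg d (snd x)). lra. Qed.

Lemma pnorm_snd_le d x : pnorm d (snd x) <= pnorm2 d x.
Proof. unfold pnorm2. pose proof (pnorm_nonneg d (fst x)). lra. Qed.

Lemma pnorm2_e2 d : pnorm2 d e2 <= 1.
Proof.
  unfold pnorm2, e2; simpl. pose proof (pnorm_pconst d 0). pose proof (pnorm_pconst d 1).
  rewrite Cmod_0 in H. rewrite Cmod_1 in H0. pose proof (pnorm_nonneg d (pconst 0)). lra.
Qed.

Definition peval (d : nat) (p : poly) (z : C) : C := csum (fun k => (p k * Cpow z k)%C) d.
Definition pdeg_lt (p : poly) (s : nat) := forall k, (s <= k)%nat -> p k = RtoC 0.
Definition pdeg2_lt (y : poly2) s := pdeg_lt (fst y) s /\ pdeg_lt (snd y) s.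
Definition peval2 d (y : poly2) z : C * C := (peval d (fst y) z, peval d (snd y) z).

Lemma peval_deg_lt p s d z : pdeg_lt p s -> (s <= d)%nat -> peval d p z = peval s p z.
Proof. intros Hp H. induction H; auto. unfold peval in *. simpl. rewrite IHle, Hp by lia. ring. Qed.

Lemma Cmod_peval_le d p z : Cmod z <= 1 -> Cmod (peval d p z) <= pnorm d p.
Proof.
  intros Hz. unfold peval, pnorm. eapply Rle_trans; [apply Cmod_csum_le|]. apply rsum_le. intros.
  rewrite Cmod_mult. pose proof (Cmod_Cpow_le_1 z k Hz). pose proof (Cmod_ge_0 (p k)).
  pose proof (Cmod_ge_0 (Cpow z k)). nra.
Qed.

Lemma peval_add d p q z : peval d (padd p q) z = (peval d p z + peval d q z)%C.
Proof. unfold peval, padd. rewrite <- csum_plus. apply csum_ext. intros; ring. Qed.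
Lemma peval_sub d p q z : peval d (psub p q) z = (peval d p z - peval d q z)%C.
Proof. unfold peval, psub. rewrite <- csum_minus. apply csum_ext. intros; ring. Qed.
Lemma peval_scal d a p z : peval d (pscal a p) z = (a * peval d p z)%C.
Proof. unfold peval, pscal. rewrite <- csum_scal. apply csum_ext. intros; ring. Qed.
Lemma peval_mulX2 d p z : peval (S (S d)) (pmulX2 p) z = (z * z * peval d p z)%C.
Proof.
  unfold peval. induction d as [|d IH]; [simpl; ring|].
  change (csum (fun k => (pmulX2 p k * Cpow z k)%C) (S (S (S d)))) with
    (csum (fun k => (pmulX2 p k * Cpow z k)%C) (S (S d)) + pmulX2 p (S (S d)) * Cpow z (S (S d)))%C.
  rewrite IH. simpl. ring.
Qed.
Lemma peval_pconst c z : peval 1 (pconst c) z = c.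
Proof. unfold peval, pconst; simpl. ring. Qed.

Lemma pdeg_lt_le p s s' : pdeg_lt p s -> (s <= s')%nat -> pdeg_lt p s'.
Proof. intros H H1 k Hk. apply H. lia. Qed.
Lemma pdeg_lt_add p q s : pdeg_lt p s -> pdeg_lt q s -> pdeg_lt (padd p q) s.
Proof. intros H1 H2 k Hk. unfold padd. rewrite H1, H2 by auto. ring. Qed.
Lemma pdeg_lt_scal a p s : pdeg_lt p s -> pdeg_lt (pscal a p) s.
Proof. intros H1 k Hk. unfold pscal. rewrite H1 by auto. ring. Qed.
Lemma pdeg_lt_mulX2 p s : pdeg_lt p s -> pdeg_lt (pmulX2 p) (s + 2).
Proof. intros H1 k Hk. destruct k as [|[|k]]; try lia. simpl. apply H1. lia. Qed.
Lemma pdeg_lt_mul_affine a b p s : pdeg_lt p s -> pdeg_lt (pmul_affine a b p) (s + 2).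
Proof.
  intros H. apply pdeg_lt_add; apply pdeg_lt_scal; [eapply pdeg_lt_le; eauto; lia|].
  apply pdeg_lt_mulX2; auto.
Qed.
Lemma pdeg_lt_pconst c : pdeg_lt (pconst c) 1.
Proof. intros k Hk. unfold pconst. destruct k; [lia|auto]. Qed.

Lemma peval_mul_affine a b p s z : pdeg_lt p s ->
  peval (s + 2) (pmul_affine a b p) z = ((a + b * (z * z)) * peval s p z)%C.
Proof.
  intros H. unfold pmul_affine. rewrite peval_add, !peval_scal. replace (s + 2)%nat with (S (S s)) by lia.
  rewrite peval_mulX2, (peval_deg_lt p s (S (S s))) by (auto; lia). ring.
Qed.

Lemma Cmod_Cpow_minus_le (w u : C) k : Cmod w <= 1 -> Cmod u <= 1 ->
  Cmod (Cpow w k - Cpow u k) <= INR k * Cmod (w - u).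
Proof.
  intros Hw Hu. induction k as [|k IH].
  - simpl. replace (1 - 1)%C with (RtoC 0) by ring. rewrite Cmod_0. lra.
  - simpl Cpow. replace (w * Cpow w k - u * Cpow u k)%C with (w * (Cpow w k - Cpow u k) + Cpow u k * (w - u))%C by ring.
    eapply Rle_trans; [apply Cmod_triangle|]. rewrite !Cmod_mult, S_INR.
    pose proof (Cmod_Cpow_le_1 u k Hu). pose proof (Cmod_ge_0 w). pose proof (Cmod_ge_0 (w - u)).
    pose proof (Cmod_ge_0 (Cpow w k - Cpow u k)). pose proof (Cmod_ge_0 (Cpow u k)).
    assert (Cmod w * Cmod (Cpow w k - Cpow u k) <= Cmod (Cpow w k - Cpow u k)) by nra.
    assert (Cmod (Cpow u k) * Cmod (w - u) <= Cmod (w - u)) by nra. lra.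
Qed.

Lemma Cmod_peval_minus_le d p w u : Cmod w <= 1 -> Cmod u <= 1 ->
  Cmod (peval d p w - peval d p u) <= INR d * Cmod (w - u) * pnorm d p.
Proof.
  intros Hw Hu. unfold peval. rewrite <- csum_minus. eapply Rle_trans; [apply Cmod_csum_le|].
  unfold pnorm. rewrite <- rsum_scal. apply rsum_le. intros k Hk.
  replace (p k * Cpow w k - p k * Cpow u k)%C with (p k * (Cpow w k - Cpow u k))%C by ring.
  rewrite Cmod_mult. pose proof (Cmod_Cpow_minus_le w u k Hw Hu). pose proof (Cmod_ge_0 (p k)).
  assert (INR k <= INR d) by (apply le_INR; lia). pose proof (Cmod_ge_0 (w - u)). pose proof (pos_INR k).
  apply Rle_trans with (Cmod (p k) * (INR k * Cmod (w - u))); [apply Rmult_le_compat_l; auto|].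
  rewrite Rmult_comm. apply Rmult_le_compat_r; auto. apply Rmult_le_compat_r; auto.
Qed.

Definition decay_profile (Cst : R) (n : Z) : R := Cst / ((1 + IZR (Z.abs n)) * (2 + IZR (Z.abs n))).

Definition decay_primitive (Cst : R) (n : Z) : R :=
  if Z_le_dec 0 n then 2 * Cst - Cst / (IZR n + 1) else Cst / (1 - IZR n).

Lemma IZR_abs_nonneg n : 0 <= IZR (Z.abs n).
Proof. apply IZR_le. lia. Qed.

Lemma decay_profile_le_Cst Cst n : 0 <= Cst -> decay_profile Cst n <= Cst.
Proof.
  intros HC. unfold decay_profile. pose proof (IZR_abs_nonneg n). unfold Rdiv.
  rewrite <- (Rmult_1_r Cst) at 2. apply Rmult_le_compat_l; auto.
  rewrite <- Rinv_1. apply Rinv_le_contravar; nra.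
Qed.

Lemma decay_profile_le_step Cst n : 0 <= Cst ->
  decay_profile Cst n <= decay_primitive Cst (n + 1) - decay_primitive Cst n.
Proof.
  intros HC. unfold decay_profile, decay_primitive. destruct (Z_le_dec 0 (n + 1)), (Z_le_dec 0 n); try lia.
  - rewrite Z.abs_eq, plus_IZR by lia. assert (0 <= IZR n) by (apply IZR_le; lia). right. field. lra.
  - assert (n = -1)%Z by lia. subst. simpl. rewrite IZR_NEG.
    replace (Cst / ((1 + 1) * (2 + 1))) with (Cst / 6) by (field; lra).
    replace (2 * Cst - Cst / (0 + 1) - Cst / (1 - - (1))) with (Cst / 2) by (field; lra). lra.
  - rewrite Z.abs_neq, opp_IZR, plus_IZR by lia.
    assert (IZR n <= -2) by (replace (-2) with (IZR (-2)) by reflexivity; apply IZR_le; lia).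
    set (a := - IZR n). assert (2 <= a) by (unfold a; lra).
    replace (1 - (IZR n + 1)) with a by (unfold a; ring). replace (1 - IZR n) with (1 + a) by (unfold a; ring).
    replace (Cst / a - Cst / (1 + a)) with (Cst / (a * (1 + a))) by (field; lra).
    unfold Rdiv. apply Rmult_le_compat_l; auto. apply Rinv_le_contravar; nra.
Qed.

Lemma decay_primitive_range Cst n : 0 <= Cst -> 0 <= decay_primitive Cst n <= 2 * Cst.
Proof.
  intros HC. unfold decay_primitive. destruct (Z_le_dec 0 n).
  - assert (0 <= IZR n) by (apply IZR_le; lia).
    assert (0 <= Cst / (IZR n + 1) <= Cst).
    { split; [apply Rdiv_le_0_compat; lra|]. unfold Rdiv. rewrite <- (Rmult_1_r Cst) at 2.
      apply Rmult_le_compat_l; auto. rewrite <- Rinv_1. apply Rinv_le_contravar; lra. }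
    lra.
  - assert (IZR n <= 0) by (apply IZR_le; lia).
    split; [apply Rdiv_le_0_compat; lra|].
    assert (Cst / (1 - IZR n) <= Cst).
    { unfold Rdiv. rewrite <- (Rmult_1_r Cst) at 2. apply Rmult_le_compat_l; auto.
      rewrite <- Rinv_1. apply Rinv_le_contravar; lra. }
    lra.
Qed.

Lemma rsum_decay_profile_le Cst m k : 0 <= Cst ->
  rsum (fun i => decay_profile Cst (m + Z.of_nat i)%Z) k
  <= decay_primitive Cst (m + Z.of_nat k) - decay_primitive Cst m.
Proof.
  intros HC. induction k as [|k IH]; simpl; [replace (m + 0)%Z with m by lia; lra|].
  pose proof (decay_profile_le_step Cst (m + Z.of_nat k) HC).
  replace (m + Z.of_nat k + 1)%Z with (m + Z.of_nat (S k))%Z in H by lia. simpl in H. lra.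
Qed.

Lemma const_div_INR_cv_0 (M : R) : 0 <= M ->
  forall e, 0 < e -> exists N, forall n, (N <= n)%nat -> M / (INR n + 1) <= e.
Proof.
  intros HM e He. destruct (archimed (M / e)) as [Hup _].
  exists (Z.to_nat (up (M / e))). intros n Hn.
  assert (Hn' : M / e <= INR n).
  { apply Rle_trans with (IZR (up (M / e))); [lra|].
    destruct (Z_le_dec 0 (up (M / e))).
    - rewrite <- (Z2Nat.id (up (M / e))), <- INR_IZR_INZ by auto. apply le_INR. auto.
    - apply Rle_trans with 0; [apply IZR_le; lia|apply pos_INR]. }
  apply Rmult_le_reg_r with (INR n + 1); [pose proof (pos_INR n); lra|].
  unfold Rdiv. rewrite Rmult_assoc, Rinv_l by (pose proof (pos_INR n); lra).
  apply Rmult_le_compat_r with (r := e) in Hn'; [|lra].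
  unfold Rdiv in Hn'. rewrite Rmult_assoc, Rinv_l, Rmult_1_r in Hn' by lra. nra.
Qed.

(** * The transfer products and their uniform limit on the closed disk *)

Section TransferSystem.

(* The recursion [x_n = transfer n z x_(n+1)]: [transfer n z] is [diag(z^2, 1)] plus a
   perturbation whose entries are affine in [z^2], with coefficients [a_i n] and [b_i n]. *)
Variables a1 a2 a3 a4 b1 b2 b3 b4 : Z -> C.
Variable Cst : R.
Hypothesis Cst_nonneg : 0 <= Cst.

Definition coef_size (n : Z) : R :=
  Cmod (a1 n) + Cmod (b1 n) + Cmod (a2 n) + Cmod (b2 n)
  + Cmod (a3 n) + Cmod (b3 n) + Cmod (a4 n) + Cmod (b4 n).

Hypothesis coef_size_le : forall n, coef_size n <= decay_profile Cst n.

Definition transfer (n : Z) (z : C) (x : C * C) : C * C :=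
  ((z * z * fst x + (a1 n + b1 n * (z * z)) * fst x + (a2 n + b2 n * (z * z)) * snd x)%C,
   (snd x + (a3 n + b3 n * (z * z)) * fst x + (a4 n + b4 n * (z * z)) * snd x)%C).

Fixpoint transfer_iter (m : Z) (k : nat) (x : C * C) (z : C) : C * C :=
  match k with O => x | S k => transfer m z (transfer_iter (m + 1)%Z k x z) end.

Lemma coef_size_nonneg n : 0 <= coef_size n.
Proof.
  unfold coef_size.
  pose proof (Cmod_ge_0 (a1 n)). pose proof (Cmod_ge_0 (a2 n)). pose proof (Cmod_ge_0 (a3 n)).
  pose proof (Cmod_ge_0 (a4 n)). pose proof (Cmod_ge_0 (b1 n)). pose proof (Cmod_ge_0 (b2 n)).
  pose proof (Cmod_ge_0 (b3 n)). pose proof (Cmod_ge_0 (b4 n)). lra.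
Qed.

Lemma rsum_coef_size_le m k : rsum (fun i => coef_size (m + Z.of_nat i)%Z) k <= 2 * Cst.
Proof.
  eapply Rle_trans; [apply rsum_le; intros; apply coef_size_le|].
  eapply Rle_trans; [apply rsum_decay_profile_le; auto|].
  pose proof (decay_primitive_range Cst (m + Z.of_nat k) Cst_nonneg).
  pose proof (decay_primitive_range Cst m Cst_nonneg). lra.
Qed.

Definition growth_bound := exp (2 * Cst).

Lemma growth_bound_pos : 0 < growth_bound.
Proof. apply exp_pos. Qed.

Definition free_op (y : poly2) : poly2 := (pmulX2 (fst y), snd y).
Definition pert_op (n : Z) (y : poly2) : poly2 :=
  (padd (pmul_affine (a1 n) (b1 n) (fst y)) (pmul_affine (a2 n) (b2 n) (snd y)),
   padd (pmul_affine (a3 n) (b3 n) (fst y)) (pmul_affine (a4 n) (b4 n) (snd y))).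
Definition transfer_op (n : Z) (y : poly2) : poly2 := padd2 (free_op y) (pert_op n y).

Fixpoint transfer_prod (m : Z) (k : nat) (y : poly2) : poly2 :=
  match k with O => y | S k => transfer_op m (transfer_prod (m + 1)%Z k y) end.

Lemma pert_op_norm d n y : pnorm2 d (pert_op n y) <= coef_size n * pnorm2 d y.
Proof.
  unfold pnorm2, pert_op, coef_size; simpl.
  pose proof (pnorm_add d (pmul_affine (a1 n) (b1 n) (fst y)) (pmul_affine (a2 n) (b2 n) (snd y))).
  pose proof (pnorm_add d (pmul_affine (a3 n) (b3 n) (fst y)) (pmul_affine (a4 n) (b4 n) (snd y))).
  pose proof (pnorm_mul_affine d (a1 n) (b1 n) (fst y)). pose proof (pnorm_mul_affine d (a2 n) (b2 n) (snd y)).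
  pose proof (pnorm_mul_affine d (a3 n) (b3 n) (fst y)). pose proof (pnorm_mul_affine d (a4 n) (b4 n) (snd y)).
  pose proof (pnorm_nonneg d (fst y)). pose proof (pnorm_nonneg d (snd y)).
  pose proof (Cmod_ge_0 (a1 n)). pose proof (Cmod_ge_0 (a2 n)). pose proof (Cmod_ge_0 (a3 n)).
  pose proof (Cmod_ge_0 (a4 n)). pose proof (Cmod_ge_0 (b1 n)). pose proof (Cmod_ge_0 (b2 n)).
  pose proof (Cmod_ge_0 (b3 n)). pose proof (Cmod_ge_0 (b4 n)). nra.
Qed.

Lemma transfer_op_norm d n y : pnorm2 d (transfer_op n y) <= (1 + coef_size n) * pnorm2 d y.
Proof.
  unfold transfer_op, padd2, pnorm2 at 1; cbn [fst snd free_op].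
  pose proof (pnorm_add d (pmulX2 (fst y)) (fst (pert_op n y))).
  pose proof (pnorm_add d (snd y) (snd (pert_op n y))).
  pose proof (pert_op_norm d n y). pose proof (pnorm_mulX2 d (fst y)).
  unfold pnorm2 in *. nra.
Qed.

Lemma transfer_prod_norm_exp d m k y :
  pnorm2 d (transfer_prod m k y) <= exp (rsum (fun i => coef_size (m + Z.of_nat i)%Z) k) * pnorm2 d y.
Proof.
  revert m. induction k as [|k IH]; intros m; simpl; [rewrite exp_0; lra|].
  assert (Hs : rsum (fun i => coef_size (m + Z.of_nat i)%Z) (S k)
               = coef_size m + rsum (fun i => coef_size (m + 1 + Z.of_nat i)%Z) k).
  { clear IH. induction k as [|k IHk]; [simpl; replace (m + 0)%Z with m by lia; ring|].
    change (rsum (fun i => coef_size (m + Z.of_nat i)%Z) (S (S k)))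
      with (rsum (fun i => coef_size (m + Z.of_nat i)%Z) (S k) + coef_size (m + Z.of_nat (S k))%Z).
    rewrite IHk. simpl. replace (m + 1 + Z.of_nat k)%Z with (m + Z.pos (Pos.of_succ_nat k))%Z by lia. ring. }
  simpl in Hs. rewrite Hs, exp_plus.
  pose proof (IH (m + 1)%Z). pose proof (coef_size_nonneg m).
  assert (1 + coef_size m <= exp (coef_size m)).
  { destruct (Req_dec (coef_size m) 0) as [E|E]; [rewrite E, exp_0; lra|]. pose proof (exp_ineq1 _ E). lra. }
  pose proof (pnorm2_nonneg d (transfer_prod (m + 1) k y)). pose proof (exp_pos (coef_size m)).
  eapply Rle_trans; [apply transfer_op_norm|].
  apply Rle_trans with (exp (coef_size m) * pnorm2 d (transfer_prod (m + 1) k y)); [apply Rmult_le_compat_r; auto|].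
  rewrite Rmult_assoc. apply Rmult_le_compat_l; lra.
Qed.

Lemma transfer_prod_norm d m k y : pnorm2 d (transfer_prod m k y) <= growth_bound * pnorm2 d y.
Proof.
  eapply Rle_trans; [apply transfer_prod_norm_exp|].
  apply Rmult_le_compat_r; [apply pnorm2_nonneg|].
  destruct (rsum_coef_size_le m k) as [H|H]; [left; apply exp_increasing; auto|rewrite H; unfold growth_bound; lra].
Qed.

Lemma transfer_prod_last m k y :
  transfer_prod m (S k) y = transfer_prod m k (transfer_op (m + Z.of_nat k)%Z y).
Proof.
  revert m. induction k as [|k IH]; intros m; [simpl; replace (m + 0)%Z with m by lia; auto|].
  change (transfer_prod m (S (S k)) y) with (transfer_op m (transfer_prod (m + 1)%Z (S k) y)).
  rewrite IH. simpl. do 3 f_equal. lia.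
Qed.

Lemma transfer_op_add n y w : transfer_op n (padd2 y w) = padd2 (transfer_op n y) (transfer_op n w).
Proof.
  destruct y as [y1 y2], w as [w1 w2].
  unfold transfer_op, padd2, free_op, pert_op, pmul_affine, padd, pscal, pmulX2; simpl.
  f_equal; apply functional_extensionality; intros [|[|k]]; ring.
Qed.

Lemma transfer_prod_add m k y w :
  transfer_prod m k (padd2 y w) = padd2 (transfer_prod m k y) (transfer_prod m k w).
Proof. revert m. induction k; intros m; simpl; auto. rewrite IHk. apply transfer_op_add. Qed.

Lemma free_op_e2 : free_op e2 = e2.
Proof. unfold free_op, e2; simpl. f_equal. apply functional_extensionality; intros [|[|[|k]]]; reflexivity. Qed.

(* The coefficients of [snd (transfer_iter (-N) (2N+1) (0, 1) z)], a polynomial in [z]. *)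
Definition approx_poly (N : nat) : poly := snd (transfer_prod (- Z.of_nat N) (2 * N + 1) e2).

Lemma approx_poly_norm d N : pnorm d (approx_poly N) <= growth_bound.
Proof.
  eapply Rle_trans; [apply pnorm_snd_le|]. eapply Rle_trans; [apply transfer_prod_norm|].
  pose proof (pnorm2_e2 d). pose proof growth_bound_pos. nra.
Qed.

(* Passing from [N] to [N + 1] adds one factor at each end; since [free_op e2 = e2], only the
   perturbations at [-(N+1)] and [N+1] contribute to the difference. *)
Lemma approx_poly_step d N : pnorm d (psub (approx_poly (S N)) (approx_poly N))
  <= growth_bound * (1 + Cst) * (2 * decay_profile Cst (Z.of_nat (S N))).
Proof.
  unfold approx_poly.
  replace (2 * S N + 1)%nat with (S (S (2 * N + 1))) by lia.
  change (transfer_prod (- Z.of_nat (S N)) (S (S (2 * N + 1))) e2)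
    with (transfer_op (- Z.of_nat (S N)) (transfer_prod (- Z.of_nat (S N) + 1) (S (2 * N + 1)) e2)).
  replace (- Z.of_nat (S N) + 1)%Z with (- Z.of_nat N)%Z by lia.
  rewrite transfer_prod_last.
  replace (- Z.of_nat N + Z.of_nat (2 * N + 1))%Z with (Z.of_nat (S N)) by lia.
  set (n1 := Z.of_nat (S N)). set (P := transfer_prod (- Z.of_nat N) (2 * N + 1)).
  replace (- Z.of_nat (S N))%Z with (- n1)%Z by auto.
  assert (Hl : transfer_op n1 e2 = padd2 e2 (pert_op n1 e2)) by (unfold transfer_op; rewrite free_op_e2; auto).
  set (Y := P (transfer_op n1 e2)).
  assert (Hdiff : psub (snd (transfer_op (- n1) Y)) (snd (P e2))
                  = padd (snd (P (pert_op n1 e2))) (snd (pert_op (- n1) Y))).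
  { unfold Y. rewrite Hl. unfold P. rewrite transfer_prod_add.
    unfold transfer_op at 1. unfold padd2, free_op, psub, padd; simpl.
    apply functional_extensionality; intros k. ring. }
  rewrite Hdiff. eapply Rle_trans; [apply pnorm_add|].
  pose proof growth_bound_pos. pose proof (pnorm2_e2 d).
  pose proof (coef_size_nonneg n1). pose proof (coef_size_nonneg (- n1)).
  assert (Hright : pnorm d (snd (P (pert_op n1 e2))) <= growth_bound * coef_size n1).
  { eapply Rle_trans; [apply pnorm_snd_le|]. eapply Rle_trans; [apply transfer_prod_norm|].
    apply Rmult_le_compat_l; [lra|]. eapply Rle_trans; [apply pert_op_norm|]. nra. }
  assert (Hleft : pnorm d (snd (pert_op (- n1) Y)) <= coef_size (- n1) * (growth_bound * (1 + coef_size n1))).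
  { eapply Rle_trans; [apply pnorm_snd_le|]. eapply Rle_trans; [apply pert_op_norm|].
    apply Rmult_le_compat_l; [lra|]. eapply Rle_trans; [apply transfer_prod_norm|].
    apply Rmult_le_compat_l; [lra|]. eapply Rle_trans; [apply transfer_op_norm|]. nra. }
  set (G := decay_profile Cst n1).
  assert (He1 : coef_size n1 <= G) by apply coef_size_le.
  assert (He2 : coef_size (- n1) <= G).
  { unfold G. replace (decay_profile Cst n1) with (decay_profile Cst (- n1))
      by (unfold decay_profile; rewrite Z.abs_opp; auto). apply coef_size_le. }
  assert (HGc : G <= Cst) by (apply decay_profile_le_Cst; auto).
  assert (coef_size (- n1) * (growth_bound * (1 + coef_size n1)) <= G * (growth_bound * (1 + Cst)))
    by (apply Rmult_le_compat; nra).
  assert (growth_bound * coef_size n1 <= growth_bound * (1 + Cst) * G).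
  { rewrite Rmult_assoc. apply Rmult_le_compat_l; nra. }
  lra.
Qed.

Definition approx_rate (N : nat) : R := growth_bound * (1 + Cst) * (2 * Cst) / (INR N + 1).

Lemma approx_rate_cv_0 e : 0 < e -> exists N, forall n, (N <= n)%nat -> approx_rate n <= e.
Proof.
  apply const_div_INR_cv_0. pose proof growth_bound_pos.
  apply Rmult_le_pos; [apply Rmult_le_pos|]; lra.
Qed.

Lemma approx_poly_cauchy d N N' : (N <= N')%nat ->
  pnorm d (psub (approx_poly N') (approx_poly N)) <= approx_rate N.
Proof.
  intros H. set (c := growth_bound * (1 + Cst) * 2).
  assert (Hc : 0 <= c) by (pose proof growth_bound_pos; unfold c; nra).
  assert (Htel : forall j, pnorm d (psub (approx_poly (N + j)) (approx_poly N))
     <= c * (decay_primitive Cst (Z.of_nat (N + j) + 1) - decay_primitive Cst (Z.of_nat N + 1))).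
  { induction j as [|j IH].
    - replace (N + 0)%nat with N by lia.
      eapply Rle_trans with (pnorm d (pconst 0)); [right; f_equal; apply functional_extensionality;
        intros [|k]; unfold psub, pconst; ring|].
      pose proof (pnorm_pconst d 0). rewrite Cmod_0 in H0. lra.
    - replace (N + S j)%nat with (S (N + j)) by lia.
      replace (psub (approx_poly (S (N + j))) (approx_poly N))
        with (padd (psub (approx_poly (S (N + j))) (approx_poly (N + j))) (psub (approx_poly (N + j)) (approx_poly N)))
        by (apply functional_extensionality; intros; unfold psub, padd; ring).
      eapply Rle_trans; [apply pnorm_add|].
      pose proof (approx_poly_step d (N + j)).
      pose proof (decay_profile_le_step Cst (Z.of_nat (S (N + j))) Cst_nonneg).
      replace (Z.of_nat (S (N + j))) with (Z.of_nat (N + j) + 1)%Z in * by lia.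
      unfold c in *. nra. }
  replace N' with (N + (N' - N))%nat by lia. eapply Rle_trans; [apply Htel|].
  pose proof (decay_primitive_range Cst (Z.of_nat (N + (N' - N)) + 1) Cst_nonneg).
  assert (E : decay_primitive Cst (Z.of_nat N + 1) = 2 * Cst - Cst / (INR N + 2)).
  { unfold decay_primitive. destruct Z_le_dec; [|lia]. rewrite plus_IZR, <- INR_IZR_INZ. do 2 f_equal. ring. }
  rewrite E. pose proof (pos_INR N).
  assert (Cst / (INR N + 2) <= Cst / (INR N + 1)).
  { unfold Rdiv. apply Rmult_le_compat_l; auto. apply Rinv_le_contravar; lra. }
  unfold approx_rate. replace (growth_bound * (1 + Cst) * (2 * Cst) / (INR N + 1)) with (c * (Cst / (INR N + 1)))
    by (unfold c; field; lra).
  apply Rmult_le_compat_l; lra.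
Qed.

Lemma peval2_transfer_op n y s z : pdeg2_lt y s ->
  peval2 (s + 2) (transfer_op n y) z = transfer n z (peval2 s y z).
Proof.
  intros [H1 H2]. unfold peval2, transfer, transfer_op, padd2, free_op, pert_op; simpl. f_equal.
  - rewrite !peval_add, !peval_mul_affine by auto. replace (s + 2)%nat with (S (S s)) by lia.
    rewrite peval_mulX2. ring.
  - rewrite !peval_add, !peval_mul_affine by auto. rewrite (peval_deg_lt (snd y) s (s + 2)) by (auto; lia). ring.
Qed.

Lemma pdeg2_lt_transfer_prod m k y s : pdeg2_lt y s -> pdeg2_lt (transfer_prod m k y) (s + 2 * k).
Proof.
  revert m. induction k as [|k IH]; intros m H; simpl; [replace (s + 0)%nat with s by lia; auto|].
  replace (s + S (k + S (k + 0)))%nat with (s + 2 * k + 2)%nat by lia.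
  destruct (IH (m + 1)%Z H) as [H1 H2]. unfold transfer_op, padd2, free_op, pert_op; simpl. split.
  - apply pdeg_lt_add; [apply pdeg_lt_mulX2; auto|apply pdeg_lt_add; apply pdeg_lt_mul_affine; auto].
  - apply pdeg_lt_add; [eapply pdeg_lt_le; eauto; lia|apply pdeg_lt_add; apply pdeg_lt_mul_affine; auto].
Qed.

Lemma peval2_transfer_prod m k y s z : pdeg2_lt y s ->
  peval2 (s + 2 * k) (transfer_prod m k y) z = transfer_iter m k (peval2 s y z) z.
Proof.
  revert m. induction k as [|k IH]; intros m H; simpl; [replace (s + 0)%nat with s by lia; auto|].
  replace (s + S (k + S (k + 0)))%nat with (s + 2 * k + 2)%nat by lia.
  rewrite peval2_transfer_op, IH; auto. apply pdeg2_lt_transfer_prod; auto.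
Qed.

Lemma Cmod_transfer_iter_le m k x z : Cmod z <= 1 ->
  Cmod (snd (transfer_iter m k x z)) <= growth_bound * (Cmod (fst x) + Cmod (snd x)).
Proof.
  intros Hz. set (y := (pconst (fst x), pconst (snd x))).
  assert (Hy : pdeg2_lt y 1) by (split; apply pdeg_lt_pconst).
  replace (transfer_iter m k x z) with (peval2 (1 + 2 * k) (transfer_prod m k y) z)
    by (rewrite peval2_transfer_prod by auto; unfold peval2, y; simpl; rewrite !peval_pconst; destruct x; auto).
  unfold peval2; cbn [fst snd].
  eapply Rle_trans; [apply Cmod_peval_le; auto|]. eapply Rle_trans; [apply pnorm_snd_le|].
  eapply Rle_trans; [apply transfer_prod_norm|]. apply Rmult_le_compat_l; [pose proof growth_bound_pos; lra|].
  unfold pnorm2, y; cbn [fst snd].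
  pose proof (pnorm_pconst (1 + 2 * k) (fst x)). pose proof (pnorm_pconst (1 + 2 * k) (snd x)). lra.
Qed.

Definition approx (N : nat) (z : C) : C := snd (transfer_iter (- Z.of_nat N) (2 * N + 1) (RtoC 0, RtoC 1) z).
Definition approx_deg (N : nat) : nat := (1 + 2 * (2 * N + 1))%nat.

Lemma approx_poly_deg N : pdeg_lt (approx_poly N) (approx_deg N).
Proof. apply (pdeg2_lt_transfer_prod _ _ e2 1). split; apply pdeg_lt_pconst. Qed.

Lemma approx_peval N z : approx N z = peval (approx_deg N) (approx_poly N) z.
Proof.
  unfold approx, approx_poly, approx_deg.
  replace (RtoC 0, RtoC 1) with (peval2 1 e2 z) by (unfold peval2, e2; simpl; rewrite !peval_pconst; auto).
  rewrite <- peval2_transfer_prod by (split; apply pdeg_lt_pconst). reflexivity.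
Qed.

Lemma approx_cauchy N N' z : (N <= N')%nat -> Cmod z <= 1 ->
  Cmod (approx N' z - approx N z) <= approx_rate N.
Proof.
  intros H Hz. rewrite !approx_peval.
  rewrite <- (peval_deg_lt (approx_poly N) (approx_deg N) (approx_deg N')) by (apply approx_poly_deg || (unfold approx_deg; lia)).
  rewrite <- peval_sub. eapply Rle_trans; [apply Cmod_peval_le; auto|]. apply approx_poly_cauchy; auto.
Qed.

Definition approx_lim (z : C) : C := Cseq_lim (fun N => approx N z).

Lemma approx_lim_dist z : Cmod z <= 1 ->
  Cseq_cv (fun N => approx N z) (approx_lim z) /\ forall N, Cmod (approx N z - approx_lim z) <= approx_rate N.
Proof. intros Hz. apply Cseq_cauchy_lim; [intros; apply approx_cauchy; auto|apply approx_rate_cv_0]. Qed.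

(* A uniform limit of polynomials of bounded l1 norm: each approximant is Lipschitz on the
   closed disk, and the approximation error is uniform. *)
Lemma approx_lim_continuous z : Cmod z <= 1 ->
  Ccontinuous_within (fun w => Cmod w <= 1) approx_lim z.
Proof.
  intros Hz e He. destruct (approx_rate_cv_0 (e / 3) ltac:(lra)) as [N HN]. specialize (HN N (le_n _)).
  set (M := INR (approx_deg N) * growth_bound + 1).
  assert (HM : 0 < M) by (unfold M; pose proof (pos_INR (approx_deg N)); pose proof growth_bound_pos; nra).
  exists (e / 3 / M). split; [apply Rdiv_lt_0_compat; lra|].
  intros w Hw Hwz.
  pose proof (proj2 (approx_lim_dist w Hw) N). pose proof (proj2 (approx_lim_dist z Hz) N).
  assert (Cmod (approx N w - approx N z) <= e / 3).
  { rewrite !approx_peval. eapply Rle_trans; [apply Cmod_peval_minus_le; auto|].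
    pose proof (approx_poly_norm (approx_deg N) N). pose proof (pnorm_nonneg (approx_deg N) (approx_poly N)).
    pose proof (pos_INR (approx_deg N)). pose proof (Cmod_ge_0 (w - z)).
    apply Rle_trans with (INR (approx_deg N) * Cmod (w - z) * growth_bound);
      [apply Rmult_le_compat_l; [apply Rmult_le_pos|]; auto|].
    apply Rle_trans with (M * Cmod (w - z)); [unfold M; nra|].
    apply Rle_trans with (M * (e / 3 / M)); [apply Rmult_le_compat_l; lra|right; field; lra]. }
  pose proof (Cmod_triangle_minus (approx_lim w) (approx N w) (approx_lim z)).
  pose proof (Cmod_triangle_minus (approx N w) (approx N z) (approx_lim z)).
  rewrite (Cmod_minus_sym (approx_lim w) (approx N w)) in H2. lra.
Qed.

Definition lim_coefs (k : nat) : C := Cseq_lim (fun N => approx_poly N k).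

Lemma lim_coefs_dist k :
  Cseq_cv (fun N => approx_poly N k) (lim_coefs k) /\ forall N, Cmod (approx_poly N k - lim_coefs k) <= approx_rate N.
Proof.
  apply Cseq_cauchy_lim; [|apply approx_rate_cv_0]. intros n m Hnm.
  eapply Rle_trans; [apply (Cmod_coef_le_pnorm (S k) (psub (approx_poly m) (approx_poly n)) k); lia|].
  apply approx_poly_cauchy; auto.
Qed.

Lemma lim_coefs_bounded : bounded_coefs lim_coefs growth_bound.
Proof.
  intros k. apply Cseq_cv_Cmod_le with (fun N => approx_poly N k); [apply lim_coefs_dist|].
  exists O. intros n _. eapply Rle_trans; [apply (Cmod_coef_le_pnorm (S k) (approx_poly n) k); lia|].
  apply approx_poly_norm.
Qed.

Lemma approx_lim_pseries z : Cmod z < 1 -> Cseq_cv (pseries_partial lim_coefs z) (approx_lim z).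
Proof.
  intros Hz e He.
  set (t := / (1 - Cmod z) + 1).
  assert (Ht : 0 < t) by (unfold t; pose proof (Rinv_0_lt_compat (1 - Cmod z) ltac:(lra)); lra).
  destruct (approx_rate_cv_0 (e / t) ltac:(apply Rdiv_lt_0_compat; lra)) as [N HN].
  specialize (HN N (le_n _)).
  exists (approx_deg N). intros K HK.
  pose proof (proj2 (approx_lim_dist z ltac:(lra)) N).
  assert (Cmod (pseries_partial lim_coefs z K - approx N z) <= approx_rate N / (1 - Cmod z)).
  { rewrite approx_peval, <- (peval_deg_lt (approx_poly N) (approx_deg N) K) by (auto using approx_poly_deg).
    unfold peval, pseries_partial. rewrite <- csum_minus. eapply Rle_trans; [apply Cmod_csum_le|].
    apply Rle_trans with (rsum (fun k => approx_rate N * Cmod z ^ k) K).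
    - apply rsum_le. intros k _.
      replace (lim_coefs k * Cpow z k - approx_poly N k * Cpow z k)%C
        with ((lim_coefs k - approx_poly N k) * Cpow z k)%C by ring.
      rewrite Cmod_mult, Cmod_pow, Cmod_minus_sym. apply Rmult_le_compat_r; [apply pow_le, Cmod_ge_0|].
      apply lim_coefs_dist.
    - rewrite rsum_scal. unfold Rdiv. apply Rmult_le_compat_l.
      + eapply Rle_trans; [apply Cmod_ge_0|apply H].
      + apply rsum_geom_le. pose proof (Cmod_ge_0 z). lra. }
  pose proof (Cmod_triangle_minus (pseries_partial lim_coefs z K) (approx N z) (approx_lim z)).
  assert (approx_rate N / (1 - Cmod z) + approx_rate N = approx_rate N * t) by (unfold t; field; lra).
  assert (approx_rate N * t <= e).
  { apply Rle_trans with (e / t * t); [apply Rmult_le_compat_r; lra|right; field; lra]. }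
  lra.
Qed.

Lemma solution_transfer_iter (x : Z -> C * C) z : (forall n, x n = transfer n z (x (n + 1)%Z)) ->
  forall k m, x m = transfer_iter m k (x (m + Z.of_nat k)%Z) z.
Proof.
  intros H k. induction k as [|k IH]; intros m; [simpl; f_equal; lia|].
  change (transfer_iter m (S k) (x (m + Z.of_nat (S k))%Z) z)
    with (transfer m z (transfer_iter (m + 1)%Z k (x (m + Z.of_nat (S k))%Z) z)).
  replace (m + Z.of_nat (S k))%Z with (m + 1 + Z.of_nat k)%Z by lia.
  rewrite <- (IH (m + 1)%Z). apply H.
Qed.

Lemma transfer_iter_minus m k x y z :
  transfer_iter m k ((fst x - fst y)%C, (snd x - snd y)%C) z
  = ((fst (transfer_iter m k x z) - fst (transfer_iter m k y z))%C,
     (snd (transfer_iter m k x z) - snd (transfer_iter m k y z))%C).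
Proof. revert m. induction k; intros m; simpl; auto. rewrite IHk. unfold transfer; simpl. f_equal; ring. Qed.

(* A solution normalised to [(0, 1)] at [+oo] is [approx N z] up to an error bounded by
   [growth_bound] times its deviation from [(0, 1)] at [N + 1]; so [approx_lim z] is its
   second component at [-oo]. *)
Lemma approx_lim_jost z (x : Z -> C * C) V : Cmod z <= 1 ->
  (forall n, x n = transfer n z (x (n + 1)%Z)) ->
  vanish_pinf (fun n => fst (x n)) -> vanish_pinf (fun n => snd (x n) - 1)%C ->
  vanish_minf (fun n => snd (x n) - V)%C ->
  approx_lim z = V.
Proof.
  intros Hz Hs Hp1 Hp2 Hm. apply (Cseq_cv_unique (fun N => approx N z)); [apply approx_lim_dist; auto|].
  intros e He. pose proof growth_bound_pos.
  destruct (Hp1 (e / 4 / growth_bound)) as [N1 HN1]; [apply Rdiv_lt_0_compat; lra|].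
  destruct (Hp2 (e / 4 / growth_bound)) as [N1' HN1']; [apply Rdiv_lt_0_compat; lra|].
  destruct (Hm (e / 2)) as [N2 HN2]; [lra|].
  exists (Z.to_nat (Z.abs N1 + Z.abs N1' + Z.abs N2)). intros N HN.
  set (xN := x (Z.of_nat N + 1)%Z).
  assert (Hdev : (approx N z - snd (x (- Z.of_nat N)%Z))%C
                 = snd (transfer_iter (- Z.of_nat N) (2 * N + 1) ((0 - fst xN)%C, (1 - snd xN)%C) z)).
  { rewrite (solution_transfer_iter x z Hs (2 * N + 1) (- Z.of_nat N)).
    replace (- Z.of_nat N + Z.of_nat (2 * N + 1))%Z with (Z.of_nat N + 1)%Z by lia.
    rewrite (transfer_iter_minus _ _ (RtoC 0, RtoC 1) xN). reflexivity. }
  pose proof (Cmod_transfer_iter_le (- Z.of_nat N) (2 * N + 1) ((0 - fst xN)%C, (1 - snd xN)%C) z Hz) as Hb.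
  rewrite <- Hdev in Hb. cbn [fst snd] in Hb.
  replace (0 - fst xN)%C with (- fst xN)%C in Hb by ring. rewrite Cmod_opp, (Cmod_minus_sym 1) in Hb.
  specialize (HN1 (Z.of_nat N + 1)%Z ltac:(lia)). specialize (HN1' (Z.of_nat N + 1)%Z ltac:(lia)).
  specialize (HN2 (- Z.of_nat N)%Z ltac:(lia)). fold xN in HN1, HN1'.
  assert (growth_bound * (Cmod (fst xN) + Cmod (snd xN - 1)) <= e / 2).
  { apply Rle_trans with (growth_bound * (e / 4 / growth_bound + e / 4 / growth_bound));
      [apply Rmult_le_compat_l; lra|right; field; lra]. }
  pose proof (Cmod_triangle_minus (approx N z) (snd (x (- Z.of_nat N)%Z)) V). lra.
Qed.

Theorem meromorphic_extension_Cinv_jost (V : C -> C) :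
  (forall y, Cmod y = 1 -> approx_lim y = V y) -> (forall y, Cmod y = 1 -> V y <> RtoC 0) ->
  meromorphic_extension (fun y => Cmod y < 1) (fun y => / V y)%C.
Proof.
  intros HV HVnz.
  destruct (meromorphic_extension_Cinv lim_coefs growth_bound approx_lim lim_coefs_bounded approx_lim_pseries)
    as [F [P [HM HB]]].
  - intros zeta Hz. apply approx_lim_continuous. lra.
  - intros zeta Hz. rewrite HV; auto.
  - exists F, P. split; auto. intros zeta Hz. rewrite <- HV by auto. apply HB. auto.
Qed.

End TransferSystem.

(** * Transport of meromorphic extensions by [z |-> 1 / z] *)

Lemma Cmod_Cinv_minus (a b : C) : a <> RtoC 0 -> b <> RtoC 0 ->
  Cmod (/ a - / b) = Cmod (a - b) / (Cmod a * Cmod b).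
Proof.
  intros Ha Hb. replace (/ a - / b)%C with ((b - a) * / (a * b))%C by (field; auto).
  rewrite Cmod_mult, Cmod_inv, Cmod_mult by (apply Cmult_neq_0; auto). rewrite Cmod_minus_sym. reflexivity.
Qed.

Lemma Cmod_Cinv_lt_1 (w : C) : 1 < Cmod w -> Cmod (/ w) < 1.
Proof.
  intros Hw. rewrite Cmod_inv by (apply Cmod_gt_0; lra).
  rewrite <- Rinv_1. apply Rinv_lt_contravar; lra.
Qed.

Lemma on_circle_Cinv z : on_circle z -> on_circle (/ z)%C.
Proof.
  unfold on_circle. intros H. rewrite Cmod_inv by (apply Cmod_gt_0; lra). rewrite H. apply Rinv_1.
Qed.

Section Inversion.

Variables (F : C -> C) (P : C -> Prop).
Hypothesis HF : meromorphic_on (fun z => Cmod z < 1) F P.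

Let Q (z : C) := 1 < Cmod z /\ P (/ z)%C.

Lemma Cinv_poles_isolated w : 1 < Cmod w -> exists d : R, 0 < d /\
  forall p, Q p -> p <> w -> d <= Cmod (p - w).
Proof.
  intros Hw. destruct HF as [_ [HP2 _]].
  assert (Hw0 : w <> RtoC 0) by (apply Cmod_gt_0; lra).
  destruct (HP2 (/ w)%C (Cmod_Cinv_lt_1 w Hw)) as [d [Hd Hd2]].
  exists (d * Cmod w). split; [nra|]. intros p [Hp1 Hp2] Hpw.
  assert (Hp0 : p <> RtoC 0) by (apply Cmod_gt_0; lra).
  assert (Hne : (/ p)%C <> (/ w)%C) by (intro E; apply Hpw; apply Cinv_inj; auto).
  specialize (Hd2 (/ p)%C Hp2 Hne). rewrite Cmod_Cinv_minus in Hd2 by auto.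
  apply Rmult_le_compat_r with (r := Cmod p * Cmod w) in Hd2; [|nra].
  unfold Rdiv in Hd2. rewrite Rmult_assoc, Rinv_l, Rmult_1_r in Hd2 by nra.
  assert (0 <= d * Cmod w * (Cmod p - 1)) by (apply Rmult_le_pos; nra). nra.
Qed.

Lemma Cinv_ex_derive w : 1 < Cmod w -> ~ Q w ->
  @ex_derive C_AbsRing C_NormedModule (fun z => F (/ z)%C) w.
Proof.
  intros Hw Hnp. destruct HF as [_ [_ [HP3 _]]].
  apply (ex_derive_comp F Cinv w).
  - apply HP3; [apply Cmod_Cinv_lt_1; auto|]. intro H. apply Hnp. split; auto.
  - apply ex_derive_C_AbsRing, ex_derive_Cinv. apply Cmod_gt_0; lra.
Qed.

(* Near [p], [z - p = - z p (1/z - 1/p)] with [|z p| <= 2 |p|^2], so the order of the pole is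
   preserved. *)
Lemma Cinv_pole_order p : Q p -> exists (m : nat) (d M : R), 0 < d /\
  forall w, 0 < Cmod (w - p) < d -> Cmod (Cpow (w - p) m * F (/ w))%C <= M.
Proof.
  intros [Hp1 Hp2]. destruct HF as [_ [_ [_ HP4]]].
  assert (Hp0 : p <> RtoC 0) by (apply Cmod_gt_0; lra).
  destruct (HP4 _ Hp2) as [m [d [M [Hd HM]]]].
  set (a := Cmod p) in *.
  exists m, (Rmin (a / 2) (d * (a * a) / 2)), ((2 * a * a) ^ m * M).
  split; [apply Rmin_pos; [lra|apply Rdiv_lt_0_compat; [apply Rmult_lt_0_compat|]; nra]|].
  intros z [Hz1 Hz2].
  assert (Hz3 : Cmod (z - p) < a / 2) by (eapply Rlt_le_trans; [exact Hz2|apply Rmin_l]).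
  assert (Hz4 : Cmod (z - p) < d * (a * a) / 2) by (eapply Rlt_le_trans; [exact Hz2|apply Rmin_r]).
  assert (Hz5 : a / 2 <= Cmod z).
  { pose proof (Cmod_reverse_triangle p z). rewrite Cmod_minus_sym in H. fold a in H. lra. }
  assert (Hz6 : Cmod z <= 2 * a).
  { pose proof (Cmod_triangle (z - p) p). replace (z - p + p)%C with z in H by ring. fold a in H. lra. }
  assert (Hz0 : z <> RtoC 0) by (apply Cmod_gt_0; lra).
  assert (Hy : 0 < Cmod (/ z - / p) < d).
  { rewrite Cmod_Cinv_minus by auto. fold a. split; [apply Rdiv_lt_0_compat; nra|].
    apply Rmult_lt_reg_r with (Cmod z * a); [nra|].
    unfold Rdiv. rewrite Rmult_assoc, Rinv_l, Rmult_1_r by nra. nra. }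
  specialize (HM _ Hy). rewrite Cmod_mult in HM.
  replace (z - p)%C with ((/ z - / p) * (- (z * p)))%C by (field; auto).
  rewrite Cpow_mult_l, !Cmod_mult, (Cmod_pow (- (z * p))), Cmod_opp, Cmod_mult. fold a.
  pose proof (Cmod_ge_0 (Cpow (/ z - / p) m)). pose proof (Cmod_ge_0 (F (/ z)%C)).
  assert (Hzm : (Cmod z * a) ^ m <= (2 * a * a) ^ m) by (apply pow_incr; split; nra).
  assert (0 <= (Cmod z * a) ^ m) by (apply pow_le; nra).
  assert (HM0 : 0 <= M) by (eapply Rle_trans; [|exact HM]; apply Rmult_le_pos; auto).
  replace (Cmod (Cpow (/ z - / p) m) * (Cmod z * a) ^ m * Cmod (F (/ z)%C))
    with ((Cmod z * a) ^ m * (Cmod (Cpow (/ z - / p) m) * Cmod (F (/ z)%C))) by ring.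
  apply Rle_trans with ((Cmod z * a) ^ m * M); [apply Rmult_le_compat_l; auto|].
  apply Rmult_le_compat_r; auto.
Qed.

End Inversion.

Theorem meromorphic_extension_Cinv_var T : meromorphic_extension (fun z => Cmod z < 1) T ->
  meromorphic_extension (fun z => 1 < Cmod z) (fun z => T (/ z)%C).
Proof.
  intros [F [P [HM HB]]].
  exists (fun z => F (/ z)%C), (fun z => 1 < Cmod z /\ P (/ z)%C). split; [split; [|split; [|split]]|].
  - intros p [H _]; auto.
  - apply (Cinv_poles_isolated F P HM).
  - apply (Cinv_ex_derive F P HM).
  - apply (Cinv_pole_order F P HM).
  - intros zeta Hz e He. destruct (HB (/ zeta)%C (on_circle_Cinv zeta Hz) e He) as [d [Hd Hd2]].
    exists d. split; auto. intros w Hw Hnp Hwz.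
    assert (Hw0 : w <> RtoC 0) by (apply Cmod_gt_0; lra).
    assert (Hz0 : zeta <> RtoC 0) by (unfold on_circle in Hz; apply Cmod_gt_0; lra).
    apply Hd2; [apply Cmod_Cinv_lt_1; auto|intro H; apply Hnp; auto|].
    rewrite Cmod_Cinv_minus by auto. unfold on_circle in Hz. rewrite Hz, Rmult_1_r.
    apply Rle_lt_trans with (Cmod (w - zeta)); auto. unfold Rdiv.
    rewrite <- (Rmult_1_r (Cmod (w - zeta))) at 2.
    apply Rmult_le_compat_l; [apply Cmod_ge_0|]. rewrite <- Rinv_1. apply Rinv_le_contravar; lra.
Qed.

Definition weight (n : Z) : R := (1 + IZR (Z.abs n)) * (2 + IZR (Z.abs n)).

Lemma bounded_on_Z_abs_le (f : Z -> R) (N : nat) :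
  exists M, forall n, (Z.abs n <= Z.of_nat N)%Z -> f n <= M.
Proof.
  induction N as [|N [M HM]].
  - exists (f 0%Z). intros n Hn. replace n with 0%Z by lia. lra.
  - exists (Rmax M (Rmax (f (Z.of_nat (S N))) (f (- Z.of_nat (S N))%Z))).
    intros n Hn. destruct (Z_le_dec (Z.abs n) (Z.of_nat N)).
    + eapply Rle_trans; [apply HM; auto|apply Rmax_l].
    + eapply Rle_trans; [|apply Rmax_r].
      destruct (Z.abs_spec n) as [[_ E]|[_ E]]; [replace n with (Z.of_nat (S N)) by lia; apply Rmax_l|].
      replace n with (- Z.of_nat (S N))%Z by lia. apply Rmax_r.
Qed.

(* Away from a finite window, [|n|^2 |q n| <= 1] and [weight n <= 6 |n|^2]. *)
Lemma rapid_decay_weight_bound q : rapid_decay q ->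
  exists Cq, 0 <= Cq /\ forall n, Cmod (q n) * weight n <= Cq.
Proof.
  intros hq. destruct (hq 2%nat) as [Hp Hm].
  destruct (Hp 1 ltac:(lra)) as [N1 HN1]. destruct (Hm 1 ltac:(lra)) as [N2 HN2].
  destruct (bounded_on_Z_abs_le (fun n => Cmod (q n) * weight n) (Z.to_nat (Z.abs N1 + Z.abs N2))) as [M HM].
  exists (Rmax 6 M). split; [apply Rle_trans with 6; [lra|apply Rmax_l]|].
  intros n. destruct (Z_le_dec (Z.abs n) (Z.of_nat (Z.to_nat (Z.abs N1 + Z.abs N2)))).
  - eapply Rle_trans; [apply HM; auto|apply Rmax_r].
  - assert (Hb : Cmod (RtoC (IZR (Z.abs n) ^ 2) * q n) <= 1)
      by (destruct (Z_le_dec 0 n); [apply HN1|apply HN2]; lia).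
    rewrite Cmod_mult, Cmod_R, Rabs_right in Hb by (apply Rle_ge, pow_le, IZR_abs_nonneg).
    set (a := IZR (Z.abs n)) in *.
    assert (Ha : 1 <= a) by (unfold a; replace 1 with (IZR 1) by reflexivity; apply IZR_le; lia).
    assert (weight n <= 6 * a ^ 2) by (unfold weight; fold a; simpl; nra).
    apply Rle_trans with 6; [|apply Rmax_l].
    pose proof (Cmod_ge_0 (q n)).
    apply Rle_trans with (Cmod (q n) * (6 * a ^ 2)); [apply Rmult_le_compat_l; auto|nra].
Qed.

Definition jost_coef_size (q r : Z -> C) (n : Z) : R :=
  2 * Cmod (q n) + Cmod (r n) + 2 * (Cmod (q n) * Cmod (r n)).

Lemma jost_coef_size_decay q r : rapid_decay q -> rapid_decay r ->
  exists Cst, 0 <= Cst /\ forall n, jost_coef_size q r n <= decay_profile Cst n.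
Proof.
  intros hq hr.
  destruct (rapid_decay_weight_bound q hq) as [Cq [HCq Hq]]. destruct (rapid_decay_weight_bound r hr) as [Cr [HCr Hr]].
  exists (2 * Cq + Cr + 2 * Cq * Cr). split; [nra|]. intros n.
  assert (Hw : 2 <= weight n) by (unfold weight; pose proof (IZR_abs_nonneg n); nra).
  specialize (Hq n). specialize (Hr n). pose proof (Cmod_ge_0 (q n)). pose proof (Cmod_ge_0 (r n)).
  unfold decay_profile, jost_coef_size. fold (weight n).
  apply Rmult_le_reg_r with (weight n); [lra|].
  unfold Rdiv. rewrite Rmult_assoc, Rinv_l, Rmult_1_r by lra.
  assert (Cmod (r n) <= Cr) by nra.
  assert (Cmod (q n) * Cmod (r n) * weight n <= Cq * Cr).
  { replace (Cmod (q n) * Cmod (r n) * weight n) with (Cmod (q n) * weight n * Cmod (r n)) by ring.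
    apply Rmult_le_compat; nra. }
  nra.
Qed.

Definition zero_seq : Z -> C := fun _ => RtoC 0.

(* The gauge [x_n = z^(-n) psi_n] turns the system into [transfer] with these coefficients. *)
Definition approx_lim_left (q r : Z -> C) : C -> C :=
  approx_lim zero_seq (fun n => - q n)%C zero_seq (fun n => - (q n * r n))%C
             zero_seq q r (fun n => q n * r n)%C.

(* At [z = 1 / y], the gauge [x_n = (z^n psib_n^2, z^n psib_n^1)] turns the system into
   [transfer] in the variable [y] with these coefficients. *)
Definition approx_lim_right (q r : Z -> C) : C -> C :=
  approx_lim (fun n => q n * r n)%C r q zero_seq
             (fun n => - (q n * r n))%C zero_seq (fun n => - q n)%C zero_seq.

Lemma coef_size_left q r n :
  coef_size zero_seq (fun n => - q n)%C zero_seq (fun n => - (q n * r n))%C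
            zero_seq q r (fun n => q n * r n)%C n = jost_coef_size q r n.
Proof. unfold coef_size, jost_coef_size, zero_seq. rewrite !Cmod_opp, !Cmod_mult, !Cmod_0. ring. Qed.

Lemma coef_size_right q r n :
  coef_size (fun n => q n * r n)%C r q zero_seq
            (fun n => - (q n * r n))%C zero_seq (fun n => - q n)%C zero_seq n = jost_coef_size q r n.
Proof. unfold coef_size, jost_coef_size, zero_seq. rewrite !Cmod_opp, !Cmod_mult, !Cmod_0. ring. Qed.

Lemma approx_lim_left_jost q r Cst z psi L Tl : 0 <= Cst ->
  (forall n, jost_coef_size q r n <= decay_profile Cst n) -> Cmod z = 1 ->
  is_solution q r z psi -> asymp_pinf z psi (RtoC 0) (RtoC 1) -> asymp_minf z psi (L / Tl)%C (/ Tl)%C ->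
  approx_lim_left q r z = (/ Tl)%C.
Proof.
  intros HC Hsize Hz Spsi [P1 P2] [_ M2].
  assert (Hz0 : z <> RtoC 0) by (apply Cmod_gt_0; lra).
  assert (Hw : forall n, Cmod (Cpowz z (- n)) = 1) by (intros; apply Cmod_Cpowz; auto).
  apply (approx_lim_jost _ _ _ _ _ _ _ _ Cst HC (fun n => Rle_trans _ _ _ (Req_le _ _ (coef_size_left q r n)) (Hsize n))
           z (fun n => (Cpowz z (- n) * fst (psi n), Cpowz z (- n) * snd (psi n))%C)); [lra| | | |].
  - intros n. unfold transfer, zero_seq; simpl. destruct (Spsi n) as [E1 E2].
    replace (Cpowz z (- n)) with (z * Cpowz z (- (n + 1)))%C
      by (rewrite <- Cpowz_succ by auto; f_equal; lia).
    rewrite E1, E2. f_equal; field; auto.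
  - refine (ev_vanish_unit_mult ev_pinf ev_pinf_imp _ _ _ Hw _ P1). intros n. simpl. ring.
  - refine (ev_vanish_unit_mult ev_pinf ev_pinf_imp _ _ _ Hw _ P2). intros n. simpl.
    transitivity (Cpowz z (- n) * snd (psi n) - Cpowz z (- n) * Cpowz z n)%C;
      [rewrite Cpowz_opp_mult by auto|]; ring.
  - refine (ev_vanish_unit_mult ev_minf ev_minf_imp _ _ _ Hw _ M2). intros n. simpl.
    transitivity (Cpowz z (- n) * snd (psi n) - / Tl * (Cpowz z (- n) * Cpowz z n))%C;
      [rewrite Cpowz_opp_mult by auto|]; ring.
Qed.

Lemma approx_lim_right_jost q r Cst y psib Lb Tbl : 0 <= Cst ->
  (forall n, jost_coef_size q r n <= decay_profile Cst n) -> Cmod y = 1 ->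
  is_solution q r (/ y)%C psib -> asymp_pinf (/ y)%C psib (RtoC 1) (RtoC 0) ->
  asymp_minf (/ y)%C psib (/ Tbl)%C (Lb / Tbl)%C ->
  approx_lim_right q r y = (/ Tbl)%C.
Proof.
  intros HC Hsize Hy Spsib [P1 P2] [M1 _].
  set (z := (/ y)%C) in *.
  assert (Hz : Cmod z = 1) by (apply on_circle_Cinv; auto).
  assert (Hy0 : y <> RtoC 0) by (apply Cmod_gt_0; lra).
  assert (Hz0 : z <> RtoC 0) by (apply Cmod_gt_0; lra).
  assert (Hw : forall n, Cmod (Cpowz z n) = 1) by (intros; apply Cmod_Cpowz; auto).
  apply (approx_lim_jost _ _ _ _ _ _ _ _ Cst HC (fun n => Rle_trans _ _ _ (Req_le _ _ (coef_size_right q r n)) (Hsize n))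
           y (fun n => (Cpowz z n * snd (psib n), Cpowz z n * fst (psib n))%C)); [lra| | | |].
  - intros n. unfold transfer, zero_seq; simpl. destruct (Spsib n) as [E1 E2].
    rewrite (Cpowz_succ z n Hz0), E1, E2.
    replace y with (/ z)%C by (unfold z; field; auto). f_equal; field; auto.
  - refine (ev_vanish_unit_mult ev_pinf ev_pinf_imp _ _ _ Hw _ P2). intros n. simpl. ring.
  - refine (ev_vanish_unit_mult ev_pinf ev_pinf_imp _ _ _ Hw _ P1). intros n. simpl.
    transitivity (Cpowz z n * fst (psib n) - Cpowz z (- n) * Cpowz z n)%C;
      [rewrite Cpowz_opp_mult by auto|]; ring.
  - refine (ev_vanish_unit_mult ev_minf ev_minf_imp _ _ _ Hw _ M1). intros n. simpl.
    transitivity (Cpowz z n * fst (psib n) - / Tbl * (Cpowz z (- n) * Cpowz z n))%C;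
      [rewrite Cpowz_opp_mult by auto|]; ring.
Qed.

Lemma meromorphic_extension_ext U T1 T2 : meromorphic_extension U T1 ->
  (forall z, on_circle z -> T1 z = T2 z) -> meromorphic_extension U T2.
Proof. intros [F [P [HM HB]]] H. exists F, P. split; auto. intros zeta Hz. rewrite <- H; auto. Qed.

Theorem Tl_meromorphic_extension q r Cst (Tl L Tr R Tbl Lb Tbr Rb : C -> C) : 0 <= Cst ->
  (forall n, jost_coef_size q r n <= decay_profile Cst n) ->
  (forall z, on_circle z -> scattering_coeffs q r z (Tl z) (L z) (Tr z) (R z) (Tbl z) (Lb z) (Tbr z) (Rb z)) ->
  meromorphic_extension (fun z => Cmod z < 1) Tl.
Proof.
  intros HC Hsize hscat.
  apply meromorphic_extension_ext with (fun z => / (/ Tl z))%C.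
  - apply (meromorphic_extension_Cinv_jost _ _ _ _ _ _ _ _ Cst HC
             (fun n => Rle_trans _ _ _ (Req_le _ _ (coef_size_left q r n)) (Hsize n))); intros y Hy;
      destruct (hscat y Hy) as (HTl & _ & _ & _ & psi & _ & _ & _ & Spsi & _ & _ & _ & Ppsi & _ & _ & _ & Mpsi & _).
    + apply (approx_lim_left_jost q r Cst y psi (L y)); auto.
    + apply Cinv_neq_0. auto.
  - intros z Hz. destruct (hscat z Hz) as [HTl _]. field. auto.
Qed.

Theorem Tbl_meromorphic_extension q r Cst (Tl L Tr R Tbl Lb Tbr Rb : C -> C) : 0 <= Cst ->
  (forall n, jost_coef_size q r n <= decay_profile Cst n) ->
  (forall z, on_circle z -> scattering_coeffs q r z (Tl z) (L z) (Tr z) (R z) (Tbl z) (Lb z) (Tbr z) (Rb z)) ->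
  meromorphic_extension (fun z => 1 < Cmod z) Tbl.
Proof.
  intros HC Hsize hscat.
  apply meromorphic_extension_ext with (fun z => / (/ Tbl (/ / z)))%C.
  - apply (meromorphic_extension_Cinv_var (fun y => / (/ Tbl (/ y)))%C).
    apply (meromorphic_extension_Cinv_jost _ _ _ _ _ _ _ _ Cst HC
             (fun n => Rle_trans _ _ _ (Req_le _ _ (coef_size_right q r n)) (Hsize n))); intros y Hy;
      destruct (hscat (/ y)%C (on_circle_Cinv y Hy))
        as (_ & _ & HTbl & _ & _ & _ & psib & _ & _ & _ & Spsib & _ & _ & _ & Ppsib & _ & _ & _ & Mpsib & _).
    + apply (approx_lim_right_jost q r Cst y psib (Lb (/ y)%C)); auto.
    + apply Cinv_neq_0. auto.
  - intros z Hz. assert (Hz0 : z <> RtoC 0) by (unfold on_circle in Hz; apply Cmod_gt_0; lra).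
    destruct (hscat z Hz) as (_ & _ & HTbl & _).
    replace (/ / z)%C with z by (field; auto). field. auto.
Qed.

Theorem theorem2p6
  (q r : Z -> C)
  (hq : rapid_decay q) (hr : rapid_decay r)
  (h1 : forall n : Z, (1 - q n * r n)%C <> RtoC 0)
  (h2 : forall n : Z, (1 + q n * r (n + 1)%Z)%C <> RtoC 0)
  (Tl L Tr R Tbl Lb Tbr Rb : C -> C)
  (hscat : forall z : C, on_circle z ->
     scattering_coeffs q r z (Tl z) (L z) (Tr z) (R z)
                             (Tbl z) (Lb z) (Tbr z) (Rb z)) :
  ((forall z : C, on_circle z -> Tl z = Tr z /\ Tbl z = Tbr z) /\
   meromorphic_extension (fun z => Cmod z < 1) Tl /\
   meromorphic_extension (fun z => 1 < Cmod z) Tbl) /\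
  (forall z : C, on_circle z ->
     (L z / Tl z = - (Rb z / Tbl z))%C /\
     (Lb z / Tbl z = - (R z / Tl z))%C /\
     (Tl z * Tbl z = 1 - L z * Lb z)%C /\
     (Tl z * Tbl z = 1 - R z * Rb z)%C).
Proof.
  (* [h1] and [h2] make the transfer matrices invertible, which the paper uses to construct the
     Jost solutions; here their existence is part of [hscat]. *)
  destruct (jost_coef_size_decay q r hq hr) as [Cst [HC Hsize]].
  split; [split; [|split]|].
  - intros z Hz. apply (scattering_relations q r z _ _ _ _ _ _ _ _ Hz (hscat z Hz)).
  - apply (Tl_meromorphic_extension q r Cst Tl L Tr R Tbl Lb Tbr Rb HC Hsize hscat).
  - apply (Tbl_meromorphic_extension q r Cst Tl L Tr R Tbl Lb Tbr Rb HC Hsize hscat).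
  - intros z Hz. apply (scattering_relations q r z _ _ _ _ _ _ _ _ Hz (hscat z Hz)).
Qed.
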